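(* Let $0<\alpha<1$ and let $p:\mathbb{R}\to\mathbb{R}$ be Lipschitz-continuous with $p_2\le p(t)\le p_1<0$ for all $t\in\mathbb{R}$, for some constants $p_2\le p_1<0$. For every $n\in\mathbb{N}$ there exists $\gamma_n>0$ such that, for all real $t_0$ and $v_0>\gamma_n$, the unique bouncing solution $u$ of $\ddot u-\frac{1}{u^\alpha}=p(t)$ with $u(t_0)=0$ and $\dot u(t_0^+)=v_0$, continued forward in time by reflecting the velocity at each collision, has at least $n$ impacts (zeros) with the singularity $u=0$ after $t_0$.
   Context: Let $\eta=((\alpha-1)p_1)^{-1/\alpha}$. For any $s$ and any $w>\sqrt{2(p_1-p_2)\eta}$ there is a unique maximal solution of the equation on an interval $(s,s')$, $s'<\infty$, with $u(t)\to0$ as $t\to s^+$ and $t\to s'^-$, $\dot u(s^+)=w$ and finite $\dot u(s'^-)<0$. A bouncing solution is a continuous function $u\ge0$ such that its zero set $Z$ is discrete, $u$ is $C^2$ and solves the equation on each open interval disjoint from $Z$, and at each $t_*\in Z$ the one-sided limits $\dot u(t_*^\pm)$ exist with $\dot u(t_*^+)=-\dot u(t_*^-)$ (elastic collision). The forward continuation from $(t_0,v_0)$ concatenates such maximal solutions, restarting at each collision time $t_*$ with velocity $-\dot u(t_*^-)$, as long as this velocity exceeds $\sqrt{2(p_1-p_2)\eta}$. *)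

From Stdlib Require Import Reals.
From Coquelicot Require Import Coquelicot.
Open Scope R_scope.

Definition eta (alpha p1 : R) : R := Rpower ((alpha - 1) * p1) (- / alpha).

Definition vthr (alpha p1 p2 : R) : R := sqrt (2 * (p1 - p2) * eta alpha p1).

Definition solves_on (alpha : R) (p u v : R -> R) (a b : R) : Prop :=
  forall t, a < t < b ->
    0 < u t /\ is_derive u t (v t) /\
    is_derive v t (/ Rpower (u t) alpha + p t).

(* The forward bouncing continuation from (t0, v0) up to its n-th impact after
   t0: impact times t0 = s 0 < s 1 < ... < s n, on each (s i, s (i+1)) u is a
   maximal solution vanishing at both ends with finite one-sided velocities
   (negative at the right end), velocity v0 at t0+, and at every intermediate
   collision s i (1 <= i < n) elastic reflection v(s i+) = - v(s i-), with the
   restart velocity above the threshold sqrt(2 (p1-p2) eta). *)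
Definition bouncing_chain (alpha p1 p2 : R) (p : R -> R) (t0 v0 : R) (n : nat)
  (u v : R -> R) (s : nat -> R) : Prop :=
  s 0%nat = t0 /\
  (forall i, (i < n)%nat -> s i < s (S i)) /\
  (forall i, (i <= n)%nat -> u (s i) = 0) /\
  (forall i, (i < n)%nat ->
     solves_on alpha p u v (s i) (s (S i)) /\
     filterlim u (at_right (s i)) (locally 0) /\
     filterlim u (at_left (s (S i))) (locally 0) /\
     (exists w_in w_out : R,
        filterlim v (at_right (s i)) (locally w_in) /\
        filterlim v (at_left (s (S i))) (locally w_out) /\ w_out < 0)) /\
  filterlim v (at_right t0) (locally v0) /\
  (forall i, (1 <= i < n)%nat ->
     exists w : R,
       filterlim v (at_left (s i)) (locally w) /\
       filterlim v (at_right (s i)) (locally (- w)) /\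
       vthr alpha p1 p2 < - w).

From Stdlib Require Import Reals Lra Lia Psatz Classical ClassicalEpsilon Ranalysis5.
From Coquelicot Require Import Coquelicot.
Open Scope R_scope.

(* Between two impacts the substitution [u = r ^ (q + 2)], [dt = r ^ (q + 1) dx] with
   [q = 2 alpha / (1 - alpha)] desingularises [u'' = u ^ (- alpha) + p t]: the new unknowns
   [(r, v, t)] solve a system that is Lipschitz once [r] is truncated, so a solution leaving
   [r = 0] with speed [w] exists by Picard iteration.  Two energies with the coefficient of
   the [r ^ (q + 2)] term frozen at [-p1] and at [-p2] are monotone along the flight; they
   force the trajectory up to a height where [-p1 r ^ (q + 2)] and [w ^ 2] are comparable and
   back down to [r = 0] within a time bounded in terms of [w], with landing speed at least
   [sqrt kappa * w], [kappa = p1 / (2 p2)].  Undoing the time change gives one flight of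
   [u]; if [v0 >= W / kappa ^ n] the [n] successive restart speeds all stay above the
   threshold, and the flights chain into a bouncing solution with [n] impacts. *)

Lemma continuous_eps_delta (f : R -> R) x :
  continuous f x <->
  forall e, 0 < e -> exists d, 0 < d /\ forall y, Rabs (y - x) < d -> Rabs (f y - f x) < e.
Proof.
  split.
  - intros Hf e He.
    destruct (proj1 (filterlim_locally _ _) Hf (mkposreal e He)) as [[d Hd] Hy].
    exists d; split; [exact Hd|]. intros y Hyx. now apply (Hy y).
  - intros H. apply filterlim_locally. intros [e He].
    destruct (H e He) as [d [Hd Hy]].
    exists (mkposreal d Hd). intros y Hb. now apply Hy.
Qed.

Lemma lt_of_mul_frac K e : 0 <= K -> 0 < e -> K * (e / (K + 1)) < e.
Proof.
  intros HK He. apply (Rmult_lt_reg_r (K + 1)); [lra|].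
  replace (K * (e / (K + 1)) * (K + 1)) with (K * e) by (field; lra). nra.
Qed.

Definition lipschitz3 (L : R) (G : R -> R -> R -> R) : Prop :=
  forall a1 a2 a3 b1 b2 b3,
    Rabs (G a1 a2 a3 - G b1 b2 b3) <= L * (Rabs (a1 - b1) + Rabs (a2 - b2) + Rabs (a3 - b3)).

Lemma continuous_lipschitz (f : R -> R) L :
  0 <= L -> (forall x y, Rabs (f x - f y) <= L * Rabs (x - y)) -> forall x, continuous f x.
Proof.
  intros HL Hf x. apply continuous_eps_delta. intros e He.
  exists (e / (L + 1)). split; [apply Rdiv_lt_0_compat; lra|]. intros y Hy.
  eapply Rle_lt_trans; [apply Hf|].
  eapply Rle_lt_trans; [apply Rmult_le_compat_l; [exact HL| left; exact Hy]|].
  now apply lt_of_mul_frac.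
Qed.

Lemma continuous_lipschitz3 (G : R -> R -> R -> R) L (a b c : R -> R) x :
  0 <= L -> lipschitz3 L G ->
  continuous a x -> continuous b x -> continuous c x ->
  continuous (fun t => G (a t) (b t) (c t)) x.
Proof.
  intros HL HG Ha Hb Hc. apply continuous_eps_delta. intros e He.
  set (e' := e / (3 * (L + 1))).
  assert (He' : 0 < e') by (unfold e'; apply Rdiv_lt_0_compat; lra).
  destruct (proj1 (continuous_eps_delta _ _) Ha e' He') as [d1 [Hd1 H1]].
  destruct (proj1 (continuous_eps_delta _ _) Hb e' He') as [d2 [Hd2 H2]].
  destruct (proj1 (continuous_eps_delta _ _) Hc e' He') as [d3 [Hd3 H3]].
  exists (Rmin d1 (Rmin d2 d3)). split; [repeat apply Rmin_pos; auto|].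
  intros y Hy.
  assert (Hy1 := Rmin_l d1 (Rmin d2 d3)). assert (Hy2 := Rmin_l d2 d3).
  assert (Hy3 := Rmin_r d2 d3). assert (Hy4 := Rmin_r d1 (Rmin d2 d3)).
  specialize (H1 y ltac:(lra)). specialize (H2 y ltac:(lra)). specialize (H3 y ltac:(lra)).
  eapply Rle_lt_trans; [apply HG|].
  apply Rle_lt_trans with (L * (3 * e')); [apply Rmult_le_compat_l; lra|].
  replace (L * (3 * e')) with (L * (e / (L + 1))) by (unfold e'; field; lra).
  now apply lt_of_mul_frac.
Qed.

Lemma continuous_Rmin (f g : R -> R) x :
  continuous f x -> continuous g x -> continuous (fun t => Rmin (f t) (g t)) x.
Proof.
  intros Hf Hg.
  apply (continuous_ext (fun t => (f t + g t - Rabs (f t - g t)) / 2)).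
  { intros t. unfold Rmin. destruct Rle_dec; unfold Rabs; destruct Rcase_abs; lra. }
  apply (continuous_mult (K:=R_AbsRing)); [|apply continuous_const].
  apply (continuous_minus (V:=R_NormedModule)).
  - now apply (continuous_plus (V:=R_NormedModule)).
  - now apply continuous_Rabs_comp, (continuous_minus (V:=R_NormedModule)).
Qed.

Lemma geometric_small (c e : R) : 0 < e -> exists k : nat, c / 2 ^ k < e.
Proof.
  intros He.
  assert (Hk : forall k, INR k <= 2 ^ k).
  { induction k; [simpl; lra|]. rewrite S_INR. simpl.
    assert (1 <= 2 ^ k) by (apply pow_R1_Rle; lra). lra. }
  pose proof (Rabs_pos c).
  destruct (archimed_cor1 (e / (Rabs c + 1))) as [N [HN HN0]];
    [apply Rdiv_lt_0_compat; lra|].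
  exists N.
  assert (HNp : 0 < INR N) by (apply lt_0_INR; lia).
  assert (H2 : 0 < 2 ^ N) by (apply pow_lt; lra).
  apply Rle_lt_trans with (Rabs c / INR N).
  - apply Rle_trans with (Rabs c / 2 ^ N).
    + apply Rmult_le_compat_r; [left; apply Rinv_0_lt_compat; lra| apply Rle_abs].
    + apply Rmult_le_compat_l; [lra|]. apply Rinv_le_contravar; auto.
  - apply (Rmult_lt_reg_r (/ (Rabs c + 1))); [apply Rinv_0_lt_compat; lra|].
    apply Rle_lt_trans with (/ INR N); [|lra].
    unfold Rdiv. rewrite Rmult_assoc, (Rmult_comm (/ INR N)), <- Rmult_assoc.
    rewrite <- (Rmult_1_l (/ INR N)) at 2.
    apply Rmult_le_compat_r; [left; apply Rinv_0_lt_compat; lra|].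
    apply (Rmult_le_reg_r (Rabs c + 1)); [lra|]. field_simplify; lra.
Qed.

Lemma eq0_of_geometric_bound (D c : R) : (forall k : nat, Rabs D <= c / 2 ^ k) -> D = 0.
Proof.
  intros H. destruct (Req_dec D 0) as [|HD]; auto.
  destruct (geometric_small c (Rabs D)) as [k Hk]; [now apply Rabs_pos_lt|].
  specialize (H k). lra.
Qed.

Lemma geometric_cauchy_limit (a : nat -> R) (B : R) :
  (forall k, Rabs (a (S k) - a k) <= B / 2 ^ k) ->
  forall k, Rabs (a k - real (Lim_seq a)) <= 2 * B / 2 ^ k.
Proof.
  intros H.
  assert (Hpow : forall k, 0 < 2 ^ k) by (intros; apply pow_lt; lra).
  assert (HB : 0 <= B).
  { specialize (H O). pose proof (Rabs_pos (a 1%nat - a 0%nat)). simpl in H. lra. }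
  assert (Htail : forall k j, Rabs (a (k + j)%nat - a k) <= 2 * B / 2 ^ k - 2 * B / 2 ^ (k + j)).
  { intros k j. induction j.
    - rewrite Nat.add_0_r, Rminus_eq_0, Rabs_R0. lra.
    - replace (k + S j)%nat with (S (k + j)) by lia.
      replace (a (S (k + j)) - a k) with ((a (S (k + j)) - a (k + j)%nat) + (a (k + j)%nat - a k))
        by ring.
      eapply Rle_trans; [apply Rabs_triang|].
      specialize (H (k + j)%nat).
      replace (2 * B / 2 ^ S (k + j)) with (B / 2 ^ (k + j)) by (simpl; field; apply pow_nonzero; lra).
      lra. }
  assert (Hbound : forall k j, Rabs (a (k + j)%nat - a k) <= 2 * B / 2 ^ k).
  { intros k j. specialize (Htail k j).
    assert (0 <= 2 * B / 2 ^ (k + j)) by (apply Rdiv_le_0_compat; [lra| apply Hpow]). lra. }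
  assert (Hl : is_lim_seq a (real (Lim_seq a))).
  { apply Lim_seq_correct', ex_lim_seq_cauchy_corr. intros [e He].
    destruct (geometric_small (2 * B) (e / 2)) as [N HN]; [lra|].
    exists N. intros n m Hn Hm. simpl.
    replace n with (N + (n - N))%nat by lia. replace m with (N + (m - N))%nat by lia.
    replace (a (N + (n - N))%nat - a (N + (m - N))%nat)
      with ((a (N + (n - N))%nat - a N) - (a (N + (m - N))%nat - a N)) by ring.
    eapply Rle_lt_trans; [apply Rabs_triang|]. rewrite Rabs_Ropp.
    pose proof (Hbound N (n - N)%nat). pose proof (Hbound N (m - N)%nat). lra. }
  intros k. rewrite Rabs_minus_sym.
  apply (is_lim_seq_le (fun j => Rabs (a (j + k)%nat - a k)) (fun _ => 2 * B / 2 ^ k)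
           (Rabs (real (Lim_seq a) - a k)) (2 * B / 2 ^ k)).
  - intros j. rewrite Nat.add_comm. apply Hbound.
  - apply (is_lim_seq_abs _ (real (Lim_seq a) - a k)).
    apply (is_lim_seq_minus' _ _ (real (Lim_seq a)) (a k)); [|apply is_lim_seq_const].
    now apply (is_lim_seq_incr_n a k).
  - apply is_lim_seq_const.
Qed.

Lemma continuous_geometric_limit (c : nat -> R -> R) (Y : R -> R) (C : R) x :
  (forall k, continuous (c k) x) -> (forall k z, Rabs (c k z - Y z) <= C / 2 ^ k) ->
  continuous Y x.
Proof.
  intros Hc HY. apply continuous_eps_delta. intros e He.
  destruct (geometric_small (2 * C) (e / 2)) as [k Hk]; [lra|].
  destruct (proj1 (continuous_eps_delta _ _) (Hc k) (e / 2)) as [d [Hd Hy]]; [lra|].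
  exists d. split; auto. intros y Hyx. specialize (Hy y Hyx).
  pose proof (HY k y). pose proof (HY k x).
  replace (Y y - Y x) with ((c k y - c k x) - (c k y - Y y) + (c k x - Y x)) by ring.
  replace (2 * C / 2 ^ k) with (C / 2 ^ k + C / 2 ^ k) in Hk by (field; apply pow_nonzero; lra).
  eapply Rle_lt_trans; [apply Rabs_triang|].
  eapply Rle_lt_trans; [apply Rplus_le_compat_r, Rabs_triang|]. rewrite Rabs_Ropp. lra.
Qed.

Lemma MVT_open (f df : R -> R) a b : a < b ->
  (forall x, a < x < b -> is_derive f x (df x)) ->
  (forall x, a <= x <= b -> continuous f x) ->
  exists c, a < c < b /\ f b - f a = df c * (b - a).
Proof.
  intros Hab Hd Hc.
  pose (Hf := fun c (P : a < c < b) =>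
    exist (fun l => derivable_pt_lim f c l) (df c) (proj1 (is_derive_Reals _ _ _) (Hd c P))).
  destruct (MVT f id a b Hf (fun c _ => derivable_pt_id c) Hab) as [c [P Hm]].
  - intros x Hx. now apply continuity_pt_filterlim, Hc.
  - intros x _. apply derivable_continuous_pt, derivable_pt_id.
  - exists c. split; [exact P|]. rewrite derive_pt_id in Hm. simpl in Hm. unfold id in Hm. lra.
Qed.

Lemma diff_le_of_deriv_le (f df : R -> R) a b M : a <= b ->
  (forall x, a < x < b -> is_derive f x (df x)) ->
  (forall x, a <= x <= b -> continuous f x) ->
  (forall x, a < x < b -> df x <= M) -> f b - f a <= M * (b - a).
Proof.
  intros Hab Hd Hc HM. destruct (Req_dec a b) as [<-|Hne]; [lra|].
  destruct (MVT_open f df a b ltac:(lra) Hd Hc) as [c [Hc' ->]].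
  apply Rmult_le_compat_r; [lra| now apply HM].
Qed.

Lemma diff_ge_of_deriv_ge (f df : R -> R) a b M : a <= b ->
  (forall x, a < x < b -> is_derive f x (df x)) ->
  (forall x, a <= x <= b -> continuous f x) ->
  (forall x, a < x < b -> M <= df x) -> M * (b - a) <= f b - f a.
Proof.
  intros Hab Hd Hc HM. destruct (Req_dec a b) as [<-|Hne]; [lra|].
  destruct (MVT_open f df a b ltac:(lra) Hd Hc) as [c [Hc' ->]].
  apply Rmult_le_compat_r; [lra| now apply HM].
Qed.

Lemma first_root (f : R -> R) a b : a <= b -> (forall x, continuous f x) -> 0 < f a -> f b <= 0 ->
  exists c, a < c <= b /\ f c = 0 /\ forall x, a <= x < c -> 0 < f x.
Proof.
  intros Hab Hc Ha Hb.
  set (E := fun x => a <= x <= b /\ forall y, a <= y <= x -> 0 < f y).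
  assert (HEa : E a) by (split; [lra| intros y Hy; replace y with a by lra; exact Ha]).
  destruct (completeness E) as [c [Hub Hlub]].
  { exists b. intros x [Hx _]. lra. }
  { now exists a. }
  assert (Hca : a <= c) by now apply Hub.
  assert (Hcb : c <= b) by (apply Hlub; intros x [Hx _]; lra).
  assert (Hbelow : forall x, a <= x < c -> 0 < f x).
  { intros x Hx. destruct (classic (exists e, E e /\ x < e)) as [[e [[_ He] Hxe]]|Hn].
    - apply He; lra.
    - assert (c <= x); [|lra]. apply Hlub. intros e He.
      apply Rnot_lt_le. intros Hlt. apply Hn. now exists e. }
  assert (Hfc : f c = 0).
  { destruct (Rtotal_order (f c) 0) as [Hneg|[H0|Hpos]]; auto; exfalso.
    - destruct (proj1 (continuous_eps_delta _ _) (Hc c) (- f c)) as [d [Hd Hy]]; [lra|].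
      destruct (Req_dec c a) as [->|Hca']; [lra|].
      set (x := Rmax a (c - d / 2)).
      assert (Hx : a <= x < c) by (unfold x, Rmax; destruct Rle_dec; lra).
      assert (Hxc : Rabs (x - c) < d)
        by (rewrite Rabs_minus_sym, Rabs_pos_eq; unfold x, Rmax in *; destruct Rle_dec; lra).
      specialize (Hy x Hxc). specialize (Hbelow x Hx).
      unfold Rabs in Hy; destruct Rcase_abs in Hy; lra.
    - destruct (Req_dec c b) as [->|Hcb']; [lra|].
      destruct (proj1 (continuous_eps_delta _ _) (Hc c) (f c) Hpos) as [d [Hd Hy]].
      set (c' := Rmin (c + d / 2) b).
      assert (Hc' : c < c' <= b) by (unfold c', Rmin; destruct Rle_dec; lra).
      assert (c' <= c); [|lra]. apply Hub. split; [lra|].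
      intros y Hy'. destruct (Rlt_le_dec y c); [apply Hbelow; lra|].
      assert (Hyc : Rabs (y - c) < d)
        by (unfold c' in Hy'; pose proof (Rmin_l (c + d / 2) b); rewrite Rabs_pos_eq; lra).
      specialize (Hy y Hyc). unfold Rabs in Hy. destruct Rcase_abs in Hy; lra. }
  exists c. repeat split; auto.
  destruct (Req_dec c a) as [->|]; lra.
Qed.

Lemma deriv_ge0_at_root_from_below (f df : R -> R) a c : a < c ->
  (forall x, a < x <= c -> is_derive f x (df x)) -> continuous df c ->
  f c = 0 -> (forall x, a <= x < c -> f x < 0) -> 0 <= df c.
Proof.
  intros Hac Hd Hdc Hf Hneg. apply Rnot_lt_le. intros Hdf.
  destruct (proj1 (continuous_eps_delta _ _) Hdc (- df c)) as [d [Hdp Hy]]; [lra|].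
  set (h := Rmin (d / 2) ((c - a) / 2)).
  assert (Hh : 0 < h) by (unfold h; apply Rmin_pos; lra).
  assert (Hh1 : h <= d / 2) by apply Rmin_l. assert (Hh2 : h <= (c - a) / 2) by apply Rmin_r.
  assert (f c - f (c - h) <= 0 * (c - (c - h))).
  { apply (diff_le_of_deriv_le f df); [lra| intros x Hx; apply Hd; lra| |].
    - intros x Hx. apply (ex_derive_continuous (K:=R_AbsRing) (V:=R_NormedModule)).
      eexists; apply Hd; lra.
    - intros x Hx. assert (Hxc : Rabs (x - c) < d) by (rewrite Rabs_minus_sym, Rabs_pos_eq; lra).
      specialize (Hy x Hxc). unfold Rabs in Hy; destruct Rcase_abs in Hy; lra. }
  specialize (Hneg (c - h) ltac:(lra)). lra.
Qed.

Lemma ex_RInt_of_continuous (f : R -> R) a b : (forall x, continuous f x) -> ex_RInt f a b.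
Proof. intros H. apply (ex_RInt_continuous (V:=R_CompleteNormedModule)). intros; apply H. Qed.

Lemma RInt_scal_exp (M C X : R) : 0 < M ->
  RInt (fun t => C * exp (2 * M * t)) 0 X = C * (exp (2 * M * X) - 1) / (2 * M).
Proof.
  intros HM.
  assert (H : is_RInt (fun t => C * exp (2 * M * t)) 0 X
     (minus ((fun t => C * exp (2 * M * t) / (2 * M)) X) ((fun t => C * exp (2 * M * t) / (2 * M)) 0))).
  { apply (is_RInt_derive (V:=R_CompleteNormedModule) (fun t => C * exp (2 * M * t) / (2 * M))).
    - intros x _. auto_derive; auto. field. lra.
    - intros x _. apply (ex_derive_continuous (K:=R_AbsRing) (V:=R_NormedModule)). auto_derive. auto. }
  rewrite (is_RInt_unique _ _ _ _ H).
  unfold minus, plus, opp; simpl. rewrite Rmult_0_r, exp_0. field. lra.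
Qed.

Lemma exp_le_compat x y : x <= y -> exp x <= exp y.
Proof. intros [H|H]; [left; now apply exp_increasing| now subst]. Qed.

Definition clamp (b x : R) : R := Rmin b (Rmax 0 x).

Lemma clamp_range b x : 0 <= b -> 0 <= clamp b x <= b.
Proof. intros. unfold clamp, Rmin, Rmax. repeat destruct Rle_dec; lra. Qed.

Lemma clamp_id b x : 0 <= x <= b -> clamp b x = x.
Proof. intros. unfold clamp, Rmin, Rmax. repeat destruct Rle_dec; lra. Qed.

Lemma clamp_lipschitz b x y : 0 <= b -> Rabs (clamp b x - clamp b y) <= Rabs (x - y).
Proof.
  intros. unfold clamp, Rmin, Rmax. repeat destruct Rle_dec; unfold Rabs; repeat destruct Rcase_abs; lra.
Qed.

Lemma continuous_clamp b x : 0 <= b -> continuous (clamp b) x.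
Proof.
  intros Hb. apply (continuous_lipschitz _ 1); [lra|].
  intros y z. rewrite Rmult_1_l. now apply clamp_lipschitz.
Qed.

Record traj := Traj { tr1 : R -> R; tr2 : R -> R; tr3 : R -> R }.

Definition traj_continuous (Y : traj) : Prop :=
  forall x, continuous (tr1 Y) x /\ continuous (tr2 Y) x /\ continuous (tr3 Y) x.

Definition traj_dist (Y Z : traj) (x : R) : R :=
  Rabs (tr1 Y x - tr1 Z x) + Rabs (tr2 Y x - tr2 Z x) + Rabs (tr3 Y x - tr3 Z x).

Definition along (G : R -> R -> R -> R) (Y : traj) (t : R) : R := G (tr1 Y t) (tr2 Y t) (tr3 Y t).

Lemma continuous_traj_dist Y Z x :
  traj_continuous Y -> traj_continuous Z -> continuous (traj_dist Y Z) x.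
Proof.
  intros HY HZ. destruct (HY x) as [Y1 [Y2 Y3]]. destruct (HZ x) as [Z1 [Z2 Z3]].
  unfold traj_dist.
  repeat apply (continuous_plus (V:=R_NormedModule));
    apply continuous_Rabs_comp, (continuous_minus (V:=R_NormedModule)); auto.
Qed.

Lemma along_lipschitz G L Y Z t :
  lipschitz3 L G -> Rabs (along G Y t - along G Z t) <= L * traj_dist Y Z t.
Proof. intros HG. apply HG. Qed.

Lemma continuous_along G L Y x :
  0 <= L -> lipschitz3 L G -> traj_continuous Y -> continuous (along G Y) x.
Proof. intros HL HG HY. destruct (HY x) as [H1 [H2 H3]]. now apply (continuous_lipschitz3 G L). Qed.

Section Picard.
Variables (F1 F2 F3 : R -> R -> R -> R) (L T y1 y2 y3 : R).
Hypotheses (HL : 0 < L) (HT : 0 < T).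
Hypotheses (HF1 : lipschitz3 L F1) (HF2 : lipschitz3 L F2) (HF3 : lipschitz3 L F3).

(* Integrating up to [clamp T x] freezes the iterates outside [[0, T]], so they are defined and
   continuous on all of [R]. *)
Definition picard_map (G : R -> R -> R -> R) (y0 : R) (Y : traj) (x : R) : R :=
  y0 + RInt (along G Y) 0 (clamp T x).

Definition picard_step (Y : traj) : traj :=
  Traj (picard_map F1 y1 Y) (picard_map F2 y2 Y) (picard_map F3 y3 Y).

Fixpoint picard_iter (k : nat) : traj :=
  match k with
  | O => Traj (fun _ => y1) (fun _ => y2) (fun _ => y3)
  | S k => picard_step (picard_iter k)
  end.

Lemma picard_map_0 G y0 Y : picard_map G y0 Y 0 = y0.
Proof.
  unfold picard_map. rewrite clamp_id, RInt_point by lra. unfold zero; simpl. ring.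
Qed.

Section PicardMap.
Variables (G : R -> R -> R -> R) (y0 : R).
Hypothesis HG : lipschitz3 L G.

Lemma continuous_picard_map Y x : traj_continuous Y -> continuous (picard_map G y0 Y) x.
Proof.
  intros HY. unfold picard_map.
  apply (continuous_plus (V:=R_NormedModule) (fun _ => y0)); [apply continuous_const|].
  apply (continuous_comp (clamp T) (fun z => RInt (along G Y) 0 z));
    [apply continuous_clamp; lra|].
  apply (ex_derive_continuous (K:=R_AbsRing) (V:=R_NormedModule)).
  exists (along G Y (clamp T x)).
  apply (is_derive_RInt _ _ 0).
  - exists (mkposreal 1 Rlt_0_1). intros b _.
    apply (RInt_correct (V:=R_CompleteNormedModule)), ex_RInt_of_continuous.
    intros; apply (continuous_along G L); auto; lra.
  - apply (continuous_along G L); auto; lra.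
Qed.

Lemma is_derive_picard_map Y x : traj_continuous Y -> 0 < x < T ->
  is_derive (picard_map G y0 Y) x (along G Y x).
Proof.
  intros HY Hx. unfold picard_map.
  replace (along G Y x) with (plus zero (along G Y x)) by (unfold plus, zero; simpl; ring).
  apply (is_derive_plus (fun _ => y0)); [apply (is_derive_const (K:=R_AbsRing) (V:=R_NormedModule))|].
  apply (is_derive_ext_loc (fun z => RInt (along G Y) 0 z)).
  - assert (Hd : 0 < Rmin x (T - x)) by (apply Rmin_pos; lra).
    exists (mkposreal _ Hd). intros y Hy. simpl in Hy.
    unfold ball in Hy; simpl in Hy. unfold AbsRing_ball, abs, minus, plus, opp in Hy; simpl in Hy.
    pose proof (Rmin_l x (T - x)). pose proof (Rmin_r x (T - x)).
    rewrite clamp_id; auto. unfold Rabs in Hy; destruct Rcase_abs in Hy; lra.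
  - apply (is_derive_RInt _ _ 0).
    + exists (mkposreal 1 Rlt_0_1). intros b _.
      apply (RInt_correct (V:=R_CompleteNormedModule)), ex_RInt_of_continuous.
      intros; apply (continuous_along G L); auto; lra.
    + apply (continuous_along G L); auto; lra.
Qed.

Lemma picard_map_lipschitz Y Z x : traj_continuous Y -> traj_continuous Z ->
  Rabs (picard_map G y0 Y x - picard_map G y0 Z x) <= L * RInt (traj_dist Y Z) 0 (clamp T x).
Proof.
  intros HY HZ. unfold picard_map.
  assert (HX := clamp_range T x ltac:(lra)). set (X := clamp T x) in *.
  assert (HcY := continuous_along G L Y). assert (HcZ := continuous_along G L Z).
  replace (y0 + RInt (along G Y) 0 X - (y0 + RInt (along G Z) 0 X))
    with (RInt (fun t => along G Y t - along G Z t) 0 X)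
    by (rewrite (RInt_minus (V:=R_CompleteNormedModule)); [unfold minus, plus, opp; simpl; ring| |];
        apply ex_RInt_of_continuous; intros; apply HcY || apply HcZ; auto; lra).
  eapply Rle_trans.
  { apply abs_RInt_le; [lra|]. apply ex_RInt_of_continuous. intros t.
    apply (continuous_minus (V:=R_NormedModule)); [apply HcY| apply HcZ]; auto; lra. }
  replace (L * RInt (traj_dist Y Z) 0 X) with (RInt (fun t => L * traj_dist Y Z t) 0 X)
    by (rewrite (RInt_scal (V:=R_CompleteNormedModule)); [reflexivity|];
        apply ex_RInt_of_continuous; intros; now apply continuous_traj_dist).
  apply RInt_le; [lra| | |].
  - apply ex_RInt_of_continuous. intros t. apply continuous_Rabs_comp.
    apply (continuous_minus (V:=R_NormedModule)); [apply HcY| apply HcZ]; auto; lra.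
  - apply ex_RInt_of_continuous. intros t.
    apply (continuous_mult (K:=R_AbsRing)); [apply continuous_const| now apply continuous_traj_dist].
  - intros t _. now apply along_lipschitz.
Qed.

End PicardMap.

Lemma picard_step_continuous Y : traj_continuous Y -> traj_continuous (picard_step Y).
Proof. intros HY x. repeat split; now apply continuous_picard_map. Qed.

Lemma picard_iter_continuous k : traj_continuous (picard_iter k).
Proof.
  induction k as [|k IH]; simpl.
  - intros x. repeat split; apply continuous_const.
  - now apply picard_step_continuous.
Qed.

Lemma picard_step_dist Y Z x : traj_continuous Y -> traj_continuous Z ->
  traj_dist (picard_step Y) (picard_step Z) x <= 3 * L * RInt (traj_dist Y Z) 0 (clamp T x).
Proof.
  intros HY HZ. unfold traj_dist at 1; simpl.
  pose proof (picard_map_lipschitz F1 y1 HF1 Y Z x HY HZ).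
  pose proof (picard_map_lipschitz F2 y2 HF2 Y Z x HY HZ).
  pose proof (picard_map_lipschitz F3 y3 HF3 Y Z x HY HZ). lra.
Qed.

Definition picard_A : R := (Rabs (F1 y1 y2 y3) + Rabs (F2 y1 y2 y3) + Rabs (F3 y1 y2 y3)) * T.

Lemma picard_A_ge0 : 0 <= picard_A.
Proof.
  unfold picard_A. apply Rmult_le_pos; [|lra].
  pose proof (Rabs_pos (F1 y1 y2 y3)). pose proof (Rabs_pos (F2 y1 y2 y3)).
  pose proof (Rabs_pos (F3 y1 y2 y3)). lra.
Qed.

Lemma picard_iter_dist_0 x : traj_dist (picard_iter 1) (picard_iter 0) x <= picard_A.
Proof.
  assert (HX := clamp_range T x ltac:(lra)).
  assert (E : forall (G : R -> R -> R -> R) y0,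
             picard_map G y0 (picard_iter 0) x - y0 = clamp T x * G y1 y2 y3).
  { intros G y0. unfold picard_map, along. simpl. rewrite RInt_const.
    unfold scal; simpl. unfold mult; simpl. ring. }
  unfold traj_dist, picard_A. simpl. rewrite !E, !Rabs_mult, (Rabs_pos_eq (clamp T x)) by lra.
  pose proof (Rabs_pos (F1 y1 y2 y3)). pose proof (Rabs_pos (F2 y1 y2 y3)).
  pose proof (Rabs_pos (F3 y1 y2 y3)). nra.
Qed.

(* The weight [exp (6 L x)] absorbs the factor [3 L] that each Picard step costs. *)
Lemma picard_iter_dist k x :
  traj_dist (picard_iter (S k)) (picard_iter k) x <= picard_A / 2 ^ k * exp (6 * L * clamp T x).
Proof.
  pose proof picard_A_ge0. revert x. induction k as [|k IH]; intros x.
  { rewrite pow_O, Rdiv_1_r. pose proof (picard_iter_dist_0 x).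
    assert (1 <= exp (6 * L * clamp T x)); [|nra].
    rewrite <- exp_0; apply exp_le_compat. pose proof (clamp_range T x ltac:(lra)). nra. }
  assert (HX := clamp_range T x ltac:(lra)). set (X := clamp T x) in *.
  assert (Hpow : 0 < 2 ^ k) by (apply pow_lt; lra).
  change (picard_iter (S (S k))) with (picard_step (picard_iter (S k))).
  change (picard_iter (S k)) with (picard_step (picard_iter k)) at 2.
  eapply Rle_trans; [apply picard_step_dist; apply picard_iter_continuous|]. fold X.
  apply Rle_trans with (3 * L * RInt (fun t => picard_A / 2 ^ k * exp (2 * (3 * L) * t)) 0 X).
  + apply Rmult_le_compat_l; [lra|]. apply RInt_le; [lra| | |].
    * apply ex_RInt_of_continuous. intros t. apply continuous_traj_dist; apply picard_iter_continuous.
    * apply ex_RInt_of_continuous. intros t.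
      apply (ex_derive_continuous (K:=R_AbsRing) (V:=R_NormedModule)). auto_derive. auto.
    * intros t Ht. replace (2 * (3 * L) * t) with (6 * L * clamp T t) by (rewrite clamp_id; lra).
      apply IH.
  + rewrite RInt_scal_exp by lra.
    replace (3 * L * (picard_A / 2 ^ k * (exp (2 * (3 * L) * X) - 1) / (2 * (3 * L))))
      with (picard_A / 2 ^ S k * (exp (6 * L * X) - 1))
      by (replace (2 * (3 * L) * X) with (6 * L * X) by ring; simpl; field; lra).
    apply Rmult_le_compat_l; [apply Rdiv_le_0_compat; [lra| apply pow_lt; lra]| lra].
Qed.

Definition picard_B : R := picard_A * exp (6 * L * T).

Lemma picard_iter_dist_unif k x : traj_dist (picard_iter (S k)) (picard_iter k) x <= picard_B / 2 ^ k.
Proof.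
  eapply Rle_trans; [apply picard_iter_dist|]. unfold picard_B.
  pose proof (clamp_range T x ltac:(lra)). pose proof picard_A_ge0.
  assert (Hpow : 0 < 2 ^ k) by (apply pow_lt; lra).
  replace (picard_A * exp (6 * L * T) / 2 ^ k) with (picard_A / 2 ^ k * exp (6 * L * T)) by (field; lra).
  apply Rmult_le_compat_l; [apply Rdiv_le_0_compat; lra|].
  apply exp_le_compat. nra.
Qed.

Definition picard_lim : traj :=
  Traj (fun x => real (Lim_seq (fun k => tr1 (picard_iter k) x)))
       (fun x => real (Lim_seq (fun k => tr2 (picard_iter k) x)))
       (fun x => real (Lim_seq (fun k => tr3 (picard_iter k) x))).

Lemma traj_dist_components Y Z x :
  Rabs (tr1 Y x - tr1 Z x) <= traj_dist Y Z x /\ Rabs (tr2 Y x - tr2 Z x) <= traj_dist Y Z x /\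
  Rabs (tr3 Y x - tr3 Z x) <= traj_dist Y Z x.
Proof.
  unfold traj_dist.
  pose proof (Rabs_pos (tr1 Y x - tr1 Z x)). pose proof (Rabs_pos (tr2 Y x - tr2 Z x)).
  pose proof (Rabs_pos (tr3 Y x - tr3 Z x)). lra.
Qed.

Section Component.
Variable pr : traj -> R -> R.
Hypothesis pr_dist : forall Y Z x, Rabs (pr Y x - pr Z x) <= traj_dist Y Z x.
Hypothesis pr_lim : forall x, pr picard_lim x = real (Lim_seq (fun k => pr (picard_iter k) x)).
Hypothesis pr_continuous : forall Y x, traj_continuous Y -> continuous (pr Y) x.

Lemma picard_lim_approx k x : Rabs (pr (picard_iter k) x - pr picard_lim x) <= 2 * picard_B / 2 ^ k.
Proof.
  rewrite pr_lim. apply (geometric_cauchy_limit (fun k => pr (picard_iter k) x)).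
  intros j. eapply Rle_trans; [apply pr_dist| apply picard_iter_dist_unif].
Qed.

Lemma continuous_picard_lim_component x : continuous (pr picard_lim) x.
Proof.
  apply (continuous_geometric_limit (fun k => pr (picard_iter k)) _ (2 * picard_B)).
  - intros k. apply pr_continuous, picard_iter_continuous.
  - intros k z. apply picard_lim_approx.
Qed.

End Component.

Lemma picard_lim_approx_all k x :
  Rabs (tr1 (picard_iter k) x - tr1 picard_lim x) <= 2 * picard_B / 2 ^ k /\
  Rabs (tr2 (picard_iter k) x - tr2 picard_lim x) <= 2 * picard_B / 2 ^ k /\
  Rabs (tr3 (picard_iter k) x - tr3 picard_lim x) <= 2 * picard_B / 2 ^ k.
Proof.
  repeat split; apply picard_lim_approx; try reflexivity; intros; apply traj_dist_components.
Qed.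

Lemma picard_lim_continuous : traj_continuous picard_lim.
Proof.
  intros x. split; [|split]; apply continuous_picard_lim_component; try reflexivity;
    first [intros Y Z z; apply traj_dist_components | intros Y z HY; apply (HY z)].
Qed.

Lemma picard_lim_fixed G y0 (pr : traj -> R -> R) : lipschitz3 L G ->
  (forall Y, pr (picard_step Y) = picard_map G y0 Y) ->
  (forall k x, Rabs (pr (picard_iter k) x - pr picard_lim x) <= 2 * picard_B / 2 ^ k) ->
  forall x, pr picard_lim x = picard_map G y0 picard_lim x.
Proof.
  intros HG Hstep Happrox x. apply Rminus_diag_uniq.
  assert (HB : 0 <= picard_B)
    by (unfold picard_B; pose proof picard_A_ge0; pose proof (exp_pos (6 * L * T)); nra).
  apply (eq0_of_geometric_bound _ (picard_B + T * L * (6 * picard_B))). intros k.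
  assert (Hpow : 0 < 2 ^ k) by (apply pow_lt; lra).
  assert (Hdist : RInt (traj_dist (picard_iter k) picard_lim) 0 (clamp T x) <= T * (6 * picard_B / 2 ^ k)).
  { pose proof (clamp_range T x ltac:(lra)).
    apply Rle_trans with (RInt (fun _ => 6 * picard_B / 2 ^ k) 0 (clamp T x)).
    - apply RInt_le; [lra| | |].
      + apply ex_RInt_of_continuous. intros; apply continuous_traj_dist;
          [apply picard_iter_continuous| apply picard_lim_continuous].
      + apply ex_RInt_of_continuous. intros; apply continuous_const.
      + intros t _. destruct (picard_lim_approx_all k t) as [A1 [A2 A3]].
        unfold traj_dist. rewrite !(Rabs_minus_sym (_ (picard_iter k) t)).
        replace (6 * picard_B / 2 ^ k) with (3 * (2 * picard_B / 2 ^ k)) by (field; lra).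
        rewrite !(Rabs_minus_sym (_ picard_lim t)). lra.
    - rewrite RInt_const. unfold scal; simpl. unfold mult; simpl.
      apply Rmult_le_compat_r; [apply Rdiv_le_0_compat; lra| lra]. }
  pose proof (picard_map_lipschitz G y0 HG (picard_iter k) picard_lim x
                (picard_iter_continuous k) picard_lim_continuous) as Hmap.
  specialize (Happrox (S k) x). rewrite <- Hstep in Hmap.
  change (picard_step (picard_iter k)) with (picard_iter (S k)) in Hmap.
  replace (2 * picard_B / 2 ^ S k) with (picard_B / 2 ^ k) in Happrox by (simpl; field; lra).
  replace (pr picard_lim x - picard_map G y0 picard_lim x)
    with (- (pr (picard_iter (S k)) x - pr picard_lim x)
          + (pr (picard_iter (S k)) x - picard_map G y0 picard_lim x)) by ring.
  eapply Rle_trans; [apply Rabs_triang|]. rewrite Rabs_Ropp.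
  replace ((picard_B + T * L * (6 * picard_B)) / 2 ^ k)
    with (picard_B / 2 ^ k + L * (T * (6 * picard_B / 2 ^ k))) by (field; lra).
  apply Rplus_le_compat; [exact Happrox|].
  eapply Rle_trans; [exact Hmap| apply Rmult_le_compat_l; lra].
Qed.

Lemma picard_lindelof :
  exists Y : traj, traj_continuous Y /\ tr1 Y 0 = y1 /\ tr2 Y 0 = y2 /\ tr3 Y 0 = y3 /\
    forall x, 0 < x < T ->
      is_derive (tr1 Y) x (along F1 Y x) /\ is_derive (tr2 Y) x (along F2 Y x) /\
      is_derive (tr3 Y) x (along F3 Y x).
Proof.
  pose proof picard_lim_continuous as Hc.
  assert (E1 := picard_lim_fixed F1 y1 tr1 HF1 (fun _ => eq_refl)
                  (fun k x => proj1 (picard_lim_approx_all k x))).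
  assert (E2 := picard_lim_fixed F2 y2 tr2 HF2 (fun _ => eq_refl)
                  (fun k x => proj1 (proj2 (picard_lim_approx_all k x)))).
  assert (E3 := picard_lim_fixed F3 y3 tr3 HF3 (fun _ => eq_refl)
                  (fun k x => proj2 (proj2 (picard_lim_approx_all k x)))).
  exists picard_lim. split; [exact Hc|].
  rewrite E1, E2, E3, !picard_map_0. do 3 (split; [reflexivity|]).
  intros x Hx. split; [|split].
  - apply is_derive_ext with (f := picard_map F1 y1 picard_lim); [intros; now rewrite E1|].
    now apply is_derive_picard_map.
  - apply is_derive_ext with (f := picard_map F2 y2 picard_lim); [intros; now rewrite E2|].
    now apply is_derive_picard_map.
  - apply is_derive_ext with (f := picard_map F3 y3 picard_lim); [intros; now rewrite E3|].
    now apply is_derive_picard_map.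
Qed.

End Picard.

Lemma filterlim_at_right_eps (f : R -> R) x l :
  (forall e, 0 < e -> exists d, 0 < d /\ forall t, x < t < x + d -> Rabs (f t - l) < e) ->
  filterlim f (at_right x) (locally l).
Proof.
  intros H. apply filterlim_locally. intros [e He].
  destruct (H e He) as [d [Hd Hy]].
  exists (mkposreal d Hd). intros y Hb Hxy. apply Hy.
  unfold ball in Hb; simpl in Hb. unfold AbsRing_ball, abs, minus, plus, opp in Hb; simpl in Hb.
  unfold Rabs in Hb; destruct Rcase_abs in Hb; lra.
Qed.

Lemma filterlim_at_left_eps (f : R -> R) x l :
  (forall e, 0 < e -> exists d, 0 < d /\ forall t, x - d < t < x -> Rabs (f t - l) < e) ->
  filterlim f (at_left x) (locally l).
Proof.
  intros H. apply filterlim_locally. intros [e He].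
  destruct (H e He) as [d [Hd Hy]].
  exists (mkposreal d Hd). intros y Hb Hxy. apply Hy.
  unfold ball in Hb; simpl in Hb. unfold AbsRing_ball, abs, minus, plus, opp in Hb; simpl in Hb.
  unfold Rabs in Hb; destruct Rcase_abs in Hb; lra.
Qed.

Lemma is_derive_Req (f : R -> R) x (l l' : R) : is_derive f x l -> l = l' -> is_derive f x l'.
Proof. now intros H <-. Qed.

Definition ppow (e x : R) : R := if Rlt_dec 0 x then Rpower x e else 0.

Lemma ppow_pos e x : 0 < x -> ppow e x = Rpower x e.
Proof. intros H. unfold ppow. destruct Rlt_dec; [auto| lra]. Qed.

Lemma ppow_nonpos e x : x <= 0 -> ppow e x = 0.
Proof. intros H. unfold ppow. destruct Rlt_dec; [lra| auto]. Qed.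

Lemma ppow_ge0 e x : 0 <= ppow e x.
Proof. unfold ppow. destruct Rlt_dec; [left; apply exp_pos| lra]. Qed.

Lemma ppow_gt0 e x : 0 < x -> 0 < ppow e x.
Proof. intros. rewrite ppow_pos by auto. apply exp_pos. Qed.

Lemma ppow_le_compat e a b : 0 <= e -> a <= b -> ppow e a <= ppow e b.
Proof.
  intros He Hab. destruct (Rle_lt_dec a 0).
  - rewrite (ppow_nonpos e a) by auto. apply ppow_ge0.
  - rewrite !ppow_pos by lra. apply Rle_Rpower_l; lra.
Qed.

Lemma ppow_succ e x : 0 <= x -> ppow (e + 1) x = x * ppow e x.
Proof.
  intros Hx. destruct (Req_dec x 0) as [->|Hx0]; [rewrite !ppow_nonpos; lra|].
  rewrite !ppow_pos, Rpower_plus, Rpower_1 by lra. ring.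
Qed.

Lemma is_derive_ppow e x : 0 < x -> is_derive (ppow e) x (e * ppow (e - 1) x).
Proof.
  intros Hx. rewrite ppow_pos by auto.
  apply (is_derive_ext_loc (fun y => Rpower y e)).
  - exists (mkposreal x Hx). intros y Hy.
    unfold ball in Hy; simpl in Hy. unfold AbsRing_ball, abs, minus, plus, opp in Hy; simpl in Hy.
    rewrite ppow_pos; auto. unfold Rabs in Hy; destruct Rcase_abs in Hy; lra.
  - apply is_derive_Reals, derivable_pt_lim_power; auto.
Qed.

Lemma continuous_ppow e x : 0 < e -> continuous (ppow e) x.
Proof.
  intros He. destruct (Rlt_le_dec 0 x) as [Hx|Hx].
  { apply (ex_derive_continuous (K:=R_AbsRing) (V:=R_NormedModule)). eexists. now apply is_derive_ppow. }
  apply continuous_eps_delta. intros eps Heps.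
  exists (Rpower eps (/ e)). split; [apply exp_pos|].
  intros y Hy. rewrite (ppow_nonpos e x Hx), Rminus_0_r, Rabs_pos_eq by apply ppow_ge0.
  destruct (Rle_lt_dec y 0); [rewrite ppow_nonpos; auto|].
  rewrite ppow_pos by auto.
  assert (y < Rpower eps (/ e)) by (unfold Rabs in Hy; destruct Rcase_abs in Hy; lra).
  apply Rlt_le_trans with (Rpower (Rpower eps (/ e)) e); [apply Rlt_Rpower_l; lra|].
  rewrite Rpower_mult, Rinv_l, Rpower_1; lra.
Qed.

Lemma ppow_lipschitz e M a b : 1 <= e -> 0 <= a <= M -> 0 <= b <= M ->
  Rabs (ppow e a - ppow e b) <= e * ppow (e - 1) M * Rabs (a - b).
Proof.
  intros He. revert a b.
  assert (Hw : forall a b, 0 <= a <= M -> 0 <= b <= M -> a < b ->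
            ppow e b - ppow e a <= e * ppow (e - 1) M * (b - a)).
  { intros a b Ha Hb Hab.
    destruct (MVT_open (ppow e) (fun x => e * ppow (e - 1) x) a b Hab) as [c [Hc ->]].
    - intros x Hx. apply is_derive_ppow; lra.
    - intros x Hx. apply continuous_ppow; lra.
    - apply Rmult_le_compat_r; [lra|]. apply Rmult_le_compat_l; [lra|].
      apply ppow_le_compat; lra. }
  intros a b Ha Hb.
  assert (0 <= e * ppow (e - 1) M) by (pose proof (ppow_ge0 (e - 1) M); nra).
  destruct (Rtotal_order a b) as [Hab|[->|Hab]].
  - pose proof (Hw a b Ha Hb Hab). pose proof (ppow_le_compat e a b ltac:(lra) ltac:(lra)).
    rewrite Rabs_minus_sym, Rabs_pos_eq, (Rabs_minus_sym a), Rabs_pos_eq; lra.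
  - rewrite !Rminus_eq_0, Rabs_R0. lra.
  - pose proof (Hw b a Hb Ha Hab). pose proof (ppow_le_compat e b a ltac:(lra) ltac:(lra)).
    rewrite !Rabs_pos_eq; lra.
Qed.

Definition free_flight (alpha : R) (p : R -> R) (s s' w w' : R) (u v : R -> R) : Prop :=
  s < s' /\ u s = 0 /\ u s' = 0 /\ solves_on alpha p u v s s' /\
  filterlim u (at_right s) (locally 0) /\ filterlim u (at_left s') (locally 0) /\
  filterlim v (at_right s) (locally w) /\ filterlim v (at_left s') (locally w') /\ w' < 0.

Section Model.
Variables (alpha p1 p2 Lp : R) (p : R -> R).
Hypotheses (Ha : 0 < alpha < 1) (Hp12 : p2 <= p1) (Hp1 : p1 < 0).
Hypothesis Hpb : forall t, p2 <= p t <= p1.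
Hypotheses (HLp : 0 <= Lp) (Hpl : forall x y, Rabs (p x - p y) <= Lp * Rabs (x - y)).

(* With [u = r ^ (qexp + 2)] and the new time [x] given by [dt = r ^ (qexp + 1) dx], the
   equation [u'' = u ^ (- alpha) + p t] becomes the regular system
   [r' = delta v], [v' = r + p t * r ^ (qexp + 1)], [t' = r ^ (qexp + 1)]. *)
Definition qexp : R := 2 * alpha / (1 - alpha).
Definition delta : R := (1 - alpha) / 2.
Definition powq (r : R) : R := ppow qexp r.
Definition flux (M r : R) : R := ppow (qexp + 1) (clamp M r).

Definition vf_r (r v t : R) : R := delta * v.
Definition vf_v (M r v t : R) : R := r + p t * flux M r.
Definition vf_t (M r v t : R) : R := flux M r.

Lemma qexp_pos : 0 < qexp.
Proof. unfold qexp. apply Rdiv_lt_0_compat; lra. Qed.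
Lemma delta_pos : 0 < delta.
Proof. unfold delta. lra. Qed.
Lemma qexp_plus2 : qexp + 2 = / delta.
Proof. unfold delta, qexp. field. lra. Qed.
Lemma qexp_alpha : (qexp + 2) * alpha = qexp.
Proof. unfold qexp. field. lra. Qed.

Lemma flux_lipschitz M r r' : 0 <= M ->
  Rabs (flux M r - flux M r') <= (qexp + 1) * ppow qexp M * Rabs (r - r').
Proof.
  intros HM. unfold flux. pose proof qexp_pos.
  eapply Rle_trans; [apply ppow_lipschitz; [lra| apply clamp_range; lra| apply clamp_range; lra]|].
  replace (qexp + 1 - 1) with qexp by ring.
  apply Rmult_le_compat_l; [pose proof (ppow_ge0 qexp M); nra| now apply clamp_lipschitz].
Qed.

Lemma flux_range M r : 0 <= M -> 0 <= flux M r <= ppow (qexp + 1) M.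
Proof.
  intros HM. unfold flux. split; [apply ppow_ge0|].
  apply ppow_le_compat; [pose proof qexp_pos; lra| apply clamp_range; lra].
Qed.

Lemma flux_id M r : 0 <= r <= M -> flux M r = r * powq r.
Proof. intros H. unfold flux, powq. rewrite clamp_id by auto. now apply ppow_succ. Qed.

Lemma lipschitz3_weaken L L' G : L <= L' -> lipschitz3 L G -> lipschitz3 L' G.
Proof.
  intros HL HG a1 a2 a3 b1 b2 b3. eapply Rle_trans; [apply HG|].
  apply Rmult_le_compat_r; [|exact HL].
  pose proof (Rabs_pos (a1 - b1)). pose proof (Rabs_pos (a2 - b2)). pose proof (Rabs_pos (a3 - b3)). lra.
Qed.

Definition vf_lip (M : R) : R :=
  delta + 2 + (- p2) * ((qexp + 1) * ppow qexp M) + (qexp + 1) * ppow qexp M + ppow (qexp + 1) M * Lp.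

Lemma vf_lip_bounds M :
  0 < vf_lip M /\ delta <= vf_lip M /\ (qexp + 1) * ppow qexp M <= vf_lip M /\
  1 + (- p2) * ((qexp + 1) * ppow qexp M) + ppow (qexp + 1) M * Lp <= vf_lip M.
Proof.
  unfold vf_lip. pose proof delta_pos. pose proof qexp_pos.
  pose proof (ppow_ge0 qexp M). pose proof (ppow_ge0 (qexp + 1) M).
  assert (0 <= (qexp + 1) * ppow qexp M) by nra.
  assert (0 <= - p2 * ((qexp + 1) * ppow qexp M)) by nra.
  assert (0 <= ppow (qexp + 1) M * Lp) by nra. lra.
Qed.

Lemma vf_r_lipschitz M : lipschitz3 (vf_lip M) vf_r.
Proof.
  apply (lipschitz3_weaken delta); [apply vf_lip_bounds|].
  intros a1 a2 a3 b1 b2 b3. unfold vf_r.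
  rewrite <- Rmult_minus_distr_l, Rabs_mult, (Rabs_pos_eq delta) by (pose proof delta_pos; lra).
  pose proof delta_pos. pose proof (Rabs_pos (a1 - b1)). pose proof (Rabs_pos (a3 - b3)). nra.
Qed.

Lemma vf_t_lipschitz M : 0 <= M -> lipschitz3 (vf_lip M) (vf_t M).
Proof.
  intros HM. apply (lipschitz3_weaken ((qexp + 1) * ppow qexp M)); [apply vf_lip_bounds|].
  intros a1 a2 a3 b1 b2 b3. unfold vf_t. eapply Rle_trans; [now apply flux_lipschitz|].
  pose proof qexp_pos. pose proof (ppow_ge0 qexp M).
  pose proof (Rabs_pos (a2 - b2)). pose proof (Rabs_pos (a3 - b3)).
  apply Rmult_le_compat_l; [nra| lra].
Qed.

Lemma vf_v_lipschitz M : 0 <= M -> lipschitz3 (vf_lip M) (vf_v M).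
Proof.
  intros HM.
  set (K := (qexp + 1) * ppow qexp M).
  apply (lipschitz3_weaken (1 + (- p2) * K + ppow (qexp + 1) M * Lp)); [apply vf_lip_bounds|].
  intros a1 a2 a3 b1 b2 b3. unfold vf_v.
  replace (a1 + p a3 * flux M a1 - (b1 + p b3 * flux M b1))
    with ((a1 - b1) + p a3 * (flux M a1 - flux M b1) + flux M b1 * (p a3 - p b3)) by ring.
  assert (Hpa : Rabs (p a3) <= - p2) by (pose proof (Hpb a3); unfold Rabs; destruct Rcase_abs; lra).
  assert (Hf := flux_lipschitz M a1 b1 HM). fold K in Hf.
  assert (Hfb := flux_range M b1 HM).
  assert (HK : 0 <= K) by (unfold K; pose proof qexp_pos; pose proof (ppow_ge0 qexp M); nra).
  pose proof (Hpl a3 b3). pose proof (Rabs_pos (a1 - b1)). pose proof (Rabs_pos (a2 - b2)).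
  pose proof (Rabs_pos (a3 - b3)). pose proof (Rabs_pos (flux M a1 - flux M b1)).
  pose proof (Rabs_pos (p a3 - p b3)).
  eapply Rle_trans; [apply Rabs_triang|]. rewrite Rabs_mult, (Rabs_pos_eq (flux M b1)) by lra.
  eapply Rle_trans; [apply Rplus_le_compat_r, Rabs_triang|]. rewrite Rabs_mult.
  assert (Rabs (p a3) * Rabs (flux M a1 - flux M b1) <= - p2 * (K * Rabs (a1 - b1)))
    by (apply Rmult_le_compat; auto; apply Rabs_pos).
  assert (flux M b1 * Rabs (p a3 - p b3) <= ppow (qexp + 1) M * (Lp * Rabs (a3 - b3)))
    by (apply Rmult_le_compat; lra).
  assert (0 <= - p2 * K * (Rabs (a2 - b2) + Rabs (a3 - b3))) by (apply Rmult_le_pos; nra).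
  assert (0 <= ppow (qexp + 1) M * Lp * (Rabs (a1 - b1) + Rabs (a2 - b2))) by (apply Rmult_le_pos; nra).
  lra.
Qed.

Definition g1 : R := - p1.
Definition g2 : R := - p2.
Definition upow (x : R) : R := x * x * powq x.
(* Beyond [r_dom] the attraction [g1 * r ^ (qexp + 1)] dominates the repulsion [r]. *)
Definition r_dom : R := Rmax 1 (ppow (/ qexp) (2 / (g1 * (1 - alpha)))).
Definition u_dom : R := upow r_dom.

Lemma g1_pos : 0 < g1.
Proof. unfold g1. lra. Qed.
Lemma g1_le_g2 : g1 <= g2.
Proof. unfold g1, g2. lra. Qed.
Lemma r_dom_ge1 : 1 <= r_dom.
Proof. apply Rmax_l. Qed.

Lemma powq_ge0 x : 0 <= powq x.
Proof. apply ppow_ge0. Qed.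
Lemma powq_le_compat a b : a <= b -> powq a <= powq b.
Proof. intros. apply ppow_le_compat; auto. pose proof qexp_pos. lra. Qed.

Lemma upow_ge0 x : 0 <= upow x.
Proof. unfold upow. pose proof (powq_ge0 x). nra. Qed.
Lemma upow_le_compat a b : 0 <= a <= b -> upow a <= upow b.
Proof.
  intros H. unfold upow. pose proof (powq_le_compat a b ltac:(lra)). pose proof (powq_ge0 a).
  assert (a * a <= b * b) by nra. nra.
Qed.
Lemma u_dom_pos : 0 < u_dom.
Proof.
  unfold u_dom, upow. pose proof r_dom_ge1. assert (0 < powq r_dom) by (apply ppow_gt0; lra).
  apply Rmult_lt_0_compat; nra.
Qed.

Lemma powq_large x : r_dom <= x -> 2 / (1 - alpha) <= g1 * powq x.
Proof.
  intros Hx. set (X := 2 / (g1 * (1 - alpha))). pose proof g1_pos. pose proof qexp_pos.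
  assert (HX : 0 < X) by (apply Rdiv_lt_0_compat; [lra| apply Rmult_lt_0_compat; lra]).
  assert (E : powq (ppow (/ qexp) X) = X).
  { unfold powq. rewrite (ppow_pos (/ qexp)), ppow_pos by (auto; apply exp_pos).
    rewrite Rpower_mult, Rinv_l, Rpower_1; lra. }
  assert (X <= powq x) by (rewrite <- E; apply powq_le_compat; eapply Rle_trans; [apply Rmax_r| exact Hx]).
  replace (2 / (1 - alpha)) with (g1 * X) by (unfold X; field; lra).
  now apply Rmult_le_compat_l; [lra|].
Qed.

Lemma upow_large x : r_dom <= x -> x * x / (1 - alpha) <= g1 * upow x / 2.
Proof.
  intros Hx. pose proof (powq_large x Hx). unfold upow. pose proof r_dom_ge1.
  replace (x * x / (1 - alpha)) with (x * x * (2 / (1 - alpha)) / 2) by (field; lra).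
  replace (g1 * (x * x * powq x) / 2) with (x * x * (g1 * powq x) / 2) by field.
  apply Rmult_le_compat_r; [lra|]. apply Rmult_le_compat_l; nra.
Qed.

Lemma accel_large x t : r_dom <= x -> x + p t * (x * powq x) <= - x.
Proof.
  intros Hx. pose proof (powq_large x Hx). pose proof (Hpb t). pose proof r_dom_ge1.
  pose proof (powq_ge0 x).
  assert (2 <= 2 / (1 - alpha)).
  { replace (2 / (1 - alpha)) with (2 + 2 * alpha / (1 - alpha)) by (field; lra).
    assert (0 <= 2 * alpha / (1 - alpha)) by (apply Rdiv_le_0_compat; lra). lra. }
  assert (p t * (x * powq x) <= p1 * (x * powq x)) by (apply Rmult_le_compat_r; nra).
  unfold g1 in *. nra.
Qed.

Lemma continuous_p x : continuous p x.
Proof. now apply (continuous_lipschitz p Lp). Qed.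

Lemma continuous_flux M x : 0 <= M -> continuous (flux M) x.
Proof.
  intros HM. apply (continuous_lipschitz _ ((qexp + 1) * ppow qexp M)).
  - pose proof qexp_pos. pose proof (ppow_ge0 qexp M). nra.
  - intros; now apply flux_lipschitz.
Qed.

Section Flight.
Variables (w s xmax : R) (r V T : R -> R).

Definition rcut : R := w + 1.
Definition vmin : R := Rmin r_dom (Rmin 1 (2 * g1 * u_dom)).
(* Time bounds: from [x = 1] on, [v] decreases at rate at least [r_dom] until the apex, and on
   the way down [|v| >= vmin] while [r <= w]. *)
Definition x_apex : R := 2 + w / r_dom.
Definition x_land : R := x_apex + 3 + w / (delta * vmin).

Hypotheses (Hw_dom : r_dom <= w) (Hw_u : 8 * g2 * u_dom <= w * w) (Hw_delta : 2 * r_dom / delta <= w).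
Hypothesis Hxmax : x_land < xmax.
Hypothesis Hcont : forall x, continuous r x /\ continuous V x /\ continuous T x.
Hypothesis Hinit : r 0 = 0 /\ V 0 = w /\ T 0 = s.
Hypothesis Hder : forall x, 0 < x < xmax ->
  is_derive r x (delta * V x) /\ is_derive V x (r x + p (T x) * flux rcut (r x)) /\
  is_derive T x (flux rcut (r x)).

Lemma w_pos : 0 < w.
Proof. pose proof r_dom_ge1. lra. Qed.

Lemma vmin_bounds : 0 < vmin /\ vmin <= r_dom /\ vmin <= 1 /\ vmin <= 2 * g1 * u_dom.
Proof.
  unfold vmin. pose proof r_dom_ge1. pose proof u_dom_pos. pose proof g1_pos.
  pose proof (Rmin_l r_dom (Rmin 1 (2 * g1 * u_dom))). pose proof (Rmin_r r_dom (Rmin 1 (2 * g1 * u_dom))).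
  pose proof (Rmin_l 1 (2 * g1 * u_dom)). pose proof (Rmin_r 1 (2 * g1 * u_dom)).
  repeat split; try lra. repeat apply Rmin_pos; nra.
Qed.

Lemma x_apex_bounds : 2 <= x_apex /\ x_apex + 3 <= x_land.
Proof.
  unfold x_land, x_apex. pose proof w_pos. pose proof r_dom_ge1. pose proof delta_pos.
  pose proof vmin_bounds.
  assert (0 <= w / r_dom) by (apply Rdiv_le_0_compat; lra).
  assert (0 <= w / (delta * vmin)) by (apply Rdiv_le_0_compat; [lra| apply Rmult_lt_0_compat; lra]). lra.
Qed.

Lemma continuous_r x : continuous r x. Proof. apply Hcont. Qed.
Lemma continuous_V x : continuous V x. Proof. apply Hcont. Qed.
Lemma continuous_T x : continuous T x. Proof. apply Hcont. Qed.

Lemma is_derive_r x : 0 < x < xmax -> is_derive r x (delta * V x).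
Proof. intros Hx. apply (Hder x Hx). Qed.

Lemma is_derive_V x : 0 < x < xmax -> 0 <= r x <= rcut ->
  is_derive V x (r x + p (T x) * (r x * powq (r x))).
Proof. intros Hx Hr. rewrite <- (flux_id rcut) by auto. apply (Hder x Hx). Qed.

Definition energy (c x : R) : R :=
  / 2 * (V x * V x) - / (1 - alpha) * (r x * r x) - c * upow (r x).

Lemma is_derive_upow x : 0 < x -> is_derive upow x (x * powq x * (qexp + 2)).
Proof.
  intros Hx. unfold upow.
  assert (D := is_derive_mult (K:=R_AbsRing) (fun t => t * t) powq x _ _
    (is_derive_mult (K:=R_AbsRing) _ _ x _ _ (is_derive_id x) (is_derive_id x) Rmult_comm)
    (is_derive_ppow qexp x Hx) Rmult_comm).
  unfold mult, plus, one in D; simpl in D. eapply is_derive_ext; [intros; reflexivity|].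
  replace (x * powq x * (qexp + 2)) with (((1 * x + x * 1) * powq x) + x * x * (qexp * ppow (qexp - 1) x)).
  { exact D. }
  unfold powq. replace (ppow qexp x) with (x * ppow (qexp - 1) x); [ring|].
  rewrite <- ppow_succ by lra. f_equal. ring.
Qed.

Lemma continuous_upow x : continuous upow x.
Proof.
  unfold upow. pose proof qexp_pos.
  apply (continuous_mult (K:=R_AbsRing)); [|now apply continuous_ppow].
  apply (continuous_mult (K:=R_AbsRing)); apply continuous_id.
Qed.

Lemma continuous_energy c x : continuous (energy c) x.
Proof.
  unfold energy.
  apply (continuous_minus (V:=R_NormedModule)); [apply (continuous_minus (V:=R_NormedModule))|].
  - apply (continuous_mult (K:=R_AbsRing)); [apply continuous_const|].
    apply (continuous_mult (K:=R_AbsRing)); apply continuous_V.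
  - apply (continuous_mult (K:=R_AbsRing)); [apply continuous_const|].
    apply (continuous_mult (K:=R_AbsRing)); apply continuous_r.
  - apply (continuous_mult (K:=R_AbsRing)); [apply continuous_const|].
    apply (continuous_comp r upow); [apply continuous_r| apply continuous_upow].
Qed.

(* For constant [p = c] this energy is conserved. *)
Lemma is_derive_energy c x : 0 < x < xmax -> 0 < r x <= rcut ->
  is_derive (energy c) x ((p (T x) - c) * V x * (r x * powq (r x))).
Proof.
  intros Hx Hr. pose proof (is_derive_V x Hx ltac:(lra)) as DV. pose proof (is_derive_r x Hx) as Dr.
  assert (DVV := is_derive_mult (K:=R_AbsRing) V V x _ _ DV DV Rmult_comm).
  assert (Drr := is_derive_mult (K:=R_AbsRing) r r x _ _ Dr Dr Rmult_comm).
  assert (Du := is_derive_comp (K:=R_AbsRing) upow r x _ _ (is_derive_upow (r x) ltac:(lra)) Dr).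
  assert (D := is_derive_minus _ _ x _ _
    (is_derive_minus _ _ x _ _ (is_derive_scal _ x (/ 2) _ DVV) (is_derive_scal _ x (/ (1 - alpha)) _ Drr))
    (is_derive_scal _ x c _ Du)).
  unfold energy. apply (is_derive_Req _ _ _ _ D).
  unfold minus, plus, opp, scal, mult; cbn -[Rinv]. unfold mult; cbn -[Rinv].
  pose proof delta_pos.
  replace (/ (1 - alpha)) with (/ (2 * delta)) by (f_equal; unfold delta; field).
  rewrite qexp_plus2.
  field. lra.
Qed.

Lemma energy_0 c : energy c 0 = w * w / 2.
Proof.
  unfold energy, upow. destruct Hinit as [-> [-> _]]. field. lra.
Qed.

Section Rise.
Variable c : R.
Hypothesis Hc : 0 < c < xmax.
Hypothesis Hrise : forall x, 0 <= x < c -> 0 < V x /\ r x < rcut.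

Lemma rise_r_mono a b : 0 <= a <= b -> b <= c -> r a <= r b.
Proof.
  intros Hab Hbc. pose proof delta_pos.
  enough (0 * (b - a) <= r b - r a) by lra.
  apply (diff_ge_of_deriv_ge r (fun x => delta * V x)); [lra| | |].
  - intros x Hx. apply is_derive_r; lra.
  - intros; apply continuous_r.
  - intros x Hx. destruct (Hrise x ltac:(lra)). nra.
Qed.

Lemma rise_r_pos x : 0 < x <= c -> 0 < r x.
Proof.
  intros Hx. pose proof delta_pos. destruct Hinit as [Hr0 _].
  destruct (MVT_open r (fun x => delta * V x) 0 x ltac:(lra)) as [y [Hy Hm]].
  - intros y Hy. apply is_derive_r; lra.
  - intros; apply continuous_r.
  - destruct (Hrise y ltac:(lra)). rewrite Hr0 in Hm.
    assert (0 < delta * V y) by nra. nra.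
Qed.

Lemma rise_energy y : 0 <= y <= c -> energy p1 y <= w * w / 2 <= energy p2 y.
Proof.
  intros Hy. pose proof (energy_0 p1). pose proof (energy_0 p2).
  assert (Hsign : forall x, 0 < x < y -> 0 <= V x * (r x * powq (r x)) /\ 0 < r x <= rcut).
  { intros x Hx. destruct (Hrise x ltac:(lra)). pose proof (rise_r_pos x ltac:(lra)).
    pose proof (powq_ge0 (r x)). split; [|lra]. apply Rmult_le_pos; [lra| nra]. }
  split.
  - enough (energy p1 y - energy p1 0 <= 0 * (y - 0)) by lra.
    apply (diff_le_of_deriv_le _ (fun x => (p (T x) - p1) * V x * (r x * powq (r x)))); [lra| | |].
    + intros x Hx. apply is_derive_energy; [lra| apply Hsign; lra].
    + intros; apply continuous_energy.
    + intros x Hx. pose proof (Hpb (T x)). destruct (Hsign x Hx). rewrite Rmult_assoc. nra.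
  - enough (0 * (y - 0) <= energy p2 y - energy p2 0) by lra.
    apply (diff_ge_of_deriv_ge _ (fun x => (p (T x) - p2) * V x * (r x * powq (r x)))); [lra| | |].
    + intros x Hx. apply is_derive_energy; [lra| apply Hsign; lra].
    + intros; apply continuous_energy.
    + intros x Hx. pose proof (Hpb (T x)). destruct (Hsign x Hx). rewrite Rmult_assoc. nra.
Qed.

Lemma rise_r_le_w y : 0 <= y <= c -> r y <= w.
Proof.
  intros Hy. destruct (Rlt_le_dec (r y) r_dom) as [Hl|Hl]; [lra|].
  destruct (rise_energy y Hy) as [HE _]. unfold energy in HE.
  pose proof (upow_large (r y) Hl). pose proof (powq_large (r y) Hl). pose proof r_dom_ge1.
  pose proof w_pos. pose proof g1_pos. pose proof (Rle_0_sqr (V y)). unfold Rsqr in *.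
  assert (2 <= 2 / (1 - alpha)).
  { apply (Rmult_le_reg_r (1 - alpha)); [lra|]. unfold Rdiv. rewrite Rmult_assoc, Rinv_l; lra. }
  assert (Hu : g1 * upow (r y) <= w * w).
  { replace (/ (1 - alpha) * (r y * r y)) with (r y * r y / (1 - alpha)) in HE by (unfold Rdiv; ring).
    unfold g1 in *. lra. }
  unfold upow in Hu. assert (2 * (r y * r y) <= w * w) by nra. nra.
Qed.

End Rise.

Lemma x_apex_range : 0 < x_apex < xmax.
Proof. pose proof x_apex_bounds. lra. Qed.

Section NoApex.
Hypothesis Hrise : forall y, 0 <= y <= x_apex -> 0 < V y /\ r y < rcut.

Lemma rise_to_apex x : 0 <= x < x_apex -> 0 < V x /\ r x < rcut.
Proof. intros. apply Hrise. lra. Qed.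

Lemma no_apex_r_dom : r_dom <= r 1.
Proof.
  destruct Hinit as [Hr0 _]. pose proof w_pos. pose proof x_apex_bounds. pose proof delta_pos.
  apply Rnot_lt_le. intros Hlt.
  assert (HV1 : forall y, 0 < y < 1 -> w / 2 <= V y).
  { intros y Hy. destruct (rise_energy x_apex x_apex_range rise_to_apex y ltac:(lra)) as [_ HE].
    unfold energy in HE.
    pose proof (rise_r_mono x_apex x_apex_range rise_to_apex y 1 ltac:(lra) ltac:(lra)).
    pose proof (rise_r_pos x_apex x_apex_range rise_to_apex y ltac:(lra)).
    assert (upow (r y) <= u_dom) by (apply upow_le_compat; lra).
    assert (0 <= / (1 - alpha) * (r y * r y)) by (apply Rmult_le_pos; [left; apply Rinv_0_lt_compat|]; nra).
    pose proof g1_le_g2. pose proof g1_pos. pose proof u_dom_pos.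
    assert (g2 * upow (r y) <= g2 * u_dom) by (apply Rmult_le_compat_l; lra).
    unfold g2 in *. destruct (Hrise y ltac:(lra)). nra. }
  assert (delta * (w / 2) * (1 - 0) <= r 1 - r 0).
  { apply (diff_ge_of_deriv_ge r (fun x => delta * V x)); [lra| | |].
    - intros y Hy. apply is_derive_r; lra.
    - intros; apply continuous_r.
    - intros y Hy. apply Rmult_le_compat_l; [lra| auto]. }
  assert (r_dom <= delta * (w / 2)); [|lra].
  apply (Rmult_le_reg_r (2 / delta)); [apply Rdiv_lt_0_compat; lra|].
  replace (delta * (w / 2) * (2 / delta)) with w by (field; lra).
  replace (r_dom * (2 / delta)) with (2 * r_dom / delta) by (field; lra). lra.
Qed.

Lemma no_apex_V1 : V 1 <= w.
Proof.
  pose proof w_pos. pose proof x_apex_bounds. pose proof no_apex_r_dom as Hr1.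
  destruct (rise_energy x_apex x_apex_range rise_to_apex 1 ltac:(lra)) as [HE _]. unfold energy in HE.
  pose proof (upow_large (r 1) Hr1). pose proof g1_pos. pose proof (upow_ge0 (r 1)).
  replace (/ (1 - alpha) * (r 1 * r 1)) with (r 1 * r 1 / (1 - alpha)) in HE by (unfold Rdiv; ring).
  destruct (Hrise 1 ltac:(lra)). unfold g1 in *. nra.
Qed.

Lemma no_apex_absurd : False.
Proof.
  pose proof w_pos. pose proof x_apex_bounds. pose proof r_dom_ge1.
  pose proof no_apex_r_dom. pose proof no_apex_V1.
  assert (V x_apex - V 1 <= - r_dom * (x_apex - 1)).
  { apply (diff_le_of_deriv_le V (fun x => r x + p (T x) * (r x * powq (r x)))); [lra| | |].
    - intros y Hy. apply is_derive_V; [lra|].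
      pose proof (rise_r_pos x_apex x_apex_range rise_to_apex y ltac:(lra)).
      destruct (Hrise y ltac:(lra)). lra.
    - intros; apply continuous_V.
    - intros y Hy. pose proof (rise_r_mono x_apex x_apex_range rise_to_apex 1 y ltac:(lra) ltac:(lra)).
      pose proof (accel_large (r y) (T y) ltac:(lra)). lra. }
  assert (r_dom * (x_apex - 1) = r_dom + w) by (unfold x_apex; field; lra).
  destruct (Hrise x_apex ltac:(lra)). lra.
Qed.

End NoApex.

Definition apex (sA : R) : Prop :=
  0 < sA <= x_apex /\ V sA = 0 /\ (forall x, 0 < x <= sA -> 0 < r x) /\
  (forall x, 0 <= x <= sA -> r x <= w) /\ w * w / 2 <= g2 * upow (r sA).

Lemma ascent : exists sA, apex sA.
Proof.
  destruct Hinit as [Hr0 [HV0 _]]. pose proof w_pos. pose proof x_apex_bounds.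
  set (h := fun x => Rmin (V x) (rcut - r x)).
  assert (Hhc : forall x, continuous h x).
  { intros x. apply continuous_Rmin; [apply continuous_V|].
    apply (continuous_minus (V:=R_NormedModule)); [apply continuous_const| apply continuous_r]. }
  assert (Hh0 : 0 < h 0) by (apply Rmin_glb_lt; unfold rcut; lra).
  destruct (classic (exists x, 0 <= x <= x_apex /\ h x <= 0)) as [[x [Hx Hhx]]|Hno].
  2:{ exfalso. apply no_apex_absurd. intros y Hy.
      assert (0 < h y) by (apply Rnot_le_lt; intros Hle; apply Hno; now exists y).
      apply Rmin_Rgt in H1. lra. }
  destruct (first_root h 0 x ltac:(lra) Hhc Hh0 Hhx) as [c [Hc [Hhc0 Hbef]]].
  assert (Hrise : forall y, 0 <= y < c -> 0 < V y /\ r y < rcut).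
  { intros y Hy. specialize (Hbef y Hy). apply Rmin_Rgt in Hbef. lra. }
  assert (Hcx : 0 < c < xmax) by lra.
  assert (Hrw := rise_r_le_w c Hcx Hrise).
  assert (HVc : V c = 0).
  { pose proof (Hrw c ltac:(lra)). unfold h, rcut, Rmin in Hhc0. destruct Rle_dec in Hhc0; lra. }
  exists c. split; [lra|]. split; [exact HVc|]. split; [exact (rise_r_pos c Hcx Hrise)|].
  split; [exact Hrw|].
  destruct (rise_energy c Hcx Hrise c ltac:(lra)) as [_ HE]. unfold energy in HE. rewrite HVc in HE.
  assert (0 <= / (1 - alpha) * (r c * r c)) by (apply Rmult_le_pos; [left; apply Rinv_0_lt_compat|]; nra).
  unfold g2. lra.
Qed.

Section Fall.
Variable sA : R.
Hypothesis Hapex : apex sA.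
Let HsA : 0 < sA <= x_apex := proj1 Hapex.
Let HVA : V sA = 0 := proj1 (proj2 Hapex).
Let Hrpos : forall x, 0 < x <= sA -> 0 < r x := proj1 (proj2 (proj2 Hapex)).
Let Hrw : forall x, 0 <= x <= sA -> r x <= w := proj1 (proj2 (proj2 (proj2 Hapex))).
Let Hu : w * w / 2 <= g2 * upow (r sA) := proj2 (proj2 (proj2 (proj2 Hapex))).

Definition e_apex : R := g1 * upow (r sA) / 2.

Lemma apex_upow : 4 * u_dom <= upow (r sA).
Proof.
  pose proof g1_pos. pose proof g1_le_g2.
  apply (Rmult_le_reg_l g2); [lra|]. lra.
Qed.

Lemma apex_high : r_dom < r sA.
Proof.
  pose proof apex_upow. pose proof u_dom_pos. apply Rnot_le_lt. intros Hle.
  assert (upow (r sA) <= u_dom) by (apply upow_le_compat; pose proof (Hrpos sA ltac:(lra)); lra). lra.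
Qed.

Lemma energy_apex : e_apex <= energy p1 sA.
Proof.
  unfold energy, e_apex. rewrite HVA. pose proof (upow_large (r sA) (Rlt_le _ _ apex_high)).
  replace (/ (1 - alpha) * (r sA * r sA)) with (r sA * r sA / (1 - alpha)) by (unfold Rdiv; ring).
  unfold g1 in *. lra.
Qed.

Lemma e_apex_large : 2 * g1 * u_dom <= e_apex.
Proof.
  unfold e_apex. pose proof apex_upow. pose proof g1_pos.
  assert (g1 * (4 * u_dom) <= g1 * upow (r sA)) by (apply Rmult_le_compat_l; lra). lra.
Qed.

Lemma fall_start : exists sB, sA < sB <= sA + 1 / 2 /\
  forall x, sA <= x <= sB -> r_dom < r x /\ r x < rcut /\ V x <= - r_dom * (x - sA).
Proof.
  pose proof apex_high as Hhigh. pose proof (Hrw sA ltac:(lra)). pose proof x_apex_bounds.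
  destruct (proj1 (continuous_eps_delta _ _) (continuous_r sA) (Rmin (r sA - r_dom) 1)) as [d [Hd Hnear]];
    [apply Rmin_pos; lra|].
  assert (Hnear' : forall x, sA <= x < sA + d -> r_dom < r x /\ r x < rcut).
  { intros x Hx. specialize (Hnear x ltac:(rewrite Rabs_pos_eq; lra)).
    pose proof (Rmin_l (r sA - r_dom) 1). pose proof (Rmin_r (r sA - r_dom) 1).
    unfold rcut. unfold Rabs in Hnear; destruct Rcase_abs in Hnear; lra. }
  exists (sA + Rmin (d / 2) (1 / 2)).
  pose proof (Rmin_l (d / 2) (1 / 2)). pose proof (Rmin_r (d / 2) (1 / 2)).
  assert (0 < Rmin (d / 2) (1 / 2)) by (apply Rmin_pos; lra).
  split; [lra|]. intros x Hx. destruct (Hnear' x ltac:(lra)) as [Hx1 Hx2]. do 2 (split; [lra|]).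
  enough (V x - V sA <= - r_dom * (x - sA)) by lra.
  apply (diff_le_of_deriv_le V (fun x => r x + p (T x) * (r x * powq (r x)))); [lra| | |].
  - intros y Hy. destruct (Hnear' y ltac:(lra)). pose proof r_dom_ge1. apply is_derive_V; lra.
  - intros; apply continuous_V.
  - intros y Hy. destruct (Hnear' y ltac:(lra)). pose proof (accel_large (r y) (T y) ltac:(lra)). lra.
Qed.

Section FallFrom.
Variable sB : R.
Hypothesis HsB : sA < sB <= sA + 1 / 2.
Hypothesis Hstart : forall x, sA <= x <= sB -> r_dom < r x /\ r x < rcut /\ V x <= - r_dom * (x - sA).

Definition x_fall : R := sB + 1 + w / (delta * vmin).

Lemma x_fall_bounds : sA + 1 < x_fall /\ x_fall < xmax.
Proof.
  unfold x_fall. pose proof x_apex_bounds. pose proof w_pos. pose proof delta_pos. pose proof vmin_bounds.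
  assert (0 <= w / (delta * vmin)) by (apply Rdiv_le_0_compat; [lra| apply Rmult_lt_0_compat; lra]).
  unfold x_land in Hxmax. lra.
Qed.

Definition falls_until (c : R) : Prop :=
  sB <= c <= x_fall /\ (forall y, sB <= y < c -> 0 < r y /\ V y < 0) /\ 0 <= r c /\ V c <= 0.

Section Falling.
Variable c : R.
Hypothesis Hc : falls_until c.

Lemma fall_V_nonpos y : sA <= y <= c -> V y <= 0.
Proof.
  intros Hy. destruct Hc as [Hcb [Hfall [_ HVc]]]. destruct (Rle_lt_dec y sB) as [Hl|Hl].
  - pose proof r_dom_ge1. destruct (Hstart y ltac:(lra)) as [_ [_ HV]]. nra.
  - destruct (Req_dec y c) as [->|Hne]; [lra|]. destruct (Hfall y ltac:(lra)). lra.
Qed.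

Lemma fall_r_decr a b : sA <= a <= b -> b <= c -> r b <= r a.
Proof.
  intros Hab Hbc. pose proof delta_pos. pose proof x_fall_bounds. destruct Hc as [Hcb _].
  enough (r b - r a <= 0 * (b - a)) by lra.
  apply (diff_le_of_deriv_le r (fun x => delta * V x)); [lra| | |].
  - intros x Hx. apply is_derive_r; lra.
  - intros; apply continuous_r.
  - intros x Hx. pose proof (fall_V_nonpos x ltac:(lra)). nra.
Qed.

Lemma fall_r_range y : sA <= y <= c -> 0 <= r y <= w /\ (y < c -> 0 < r y).
Proof.
  intros Hy. destruct Hc as [Hcb [Hfall [Hrc _]]]. pose proof r_dom_ge1.
  assert (Hpos : y < c -> 0 < r y).
  { intros Hyc. destruct (Rle_lt_dec y sB).
    - destruct (Hstart y ltac:(lra)). lra.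
    - now apply Hfall; lra. }
  split; [split|exact Hpos].
  - destruct (Req_dec y c) as [->|]; [lra|]. pose proof (Hpos ltac:(lra)). lra.
  - pose proof (fall_r_decr sA y ltac:(lra) ltac:(lra)). pose proof (Hrw sA ltac:(lra)). lra.
Qed.

Lemma fall_energy y : sA <= y <= c -> e_apex <= energy p1 y.
Proof.
  intros Hy. pose proof energy_apex. pose proof x_fall_bounds. destruct Hc as [Hcb _].
  enough (0 * (y - sA) <= energy p1 y - energy p1 sA) by lra.
  apply (diff_ge_of_deriv_ge _ (fun x => (p (T x) - p1) * V x * (r x * powq (r x)))); [lra| | |].
  - intros x Hx. apply is_derive_energy; [lra|].
    destruct (fall_r_range x ltac:(lra)) as [Hr Hp]. specialize (Hp ltac:(lra)). unfold rcut. lra.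
  - intros; apply continuous_energy.
  - intros x Hx. pose proof (Hpb (T x)). pose proof (fall_V_nonpos x ltac:(lra)).
    destruct (fall_r_range x ltac:(lra)) as [Hr _]. pose proof (powq_ge0 (r x)).
    assert (0 <= r x * powq (r x)) by (apply Rmult_le_pos; lra).
    assert (0 <= (p (T x) - p1) * V x) by nra. rewrite Rmult_assoc. nra.
Qed.

(* Below [r_dom] the potential is too small to absorb the energy [e_apex]. *)
Lemma fall_speed_low y : sA <= y <= c -> r y < r_dom -> g1 * u_dom <= V y * V y / 2.
Proof.
  intros Hy Hl. pose proof (fall_energy y Hy) as HE. unfold energy in HE.
  pose proof e_apex_large. pose proof g1_pos. destruct (fall_r_range y Hy) as [Hr _].
  assert (upow (r y) <= u_dom) by (apply upow_le_compat; lra).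
  assert (0 <= / (1 - alpha) * (r y * r y)) by (apply Rmult_le_pos; [left; apply Rinv_0_lt_compat|]; nra).
  assert (g1 * upow (r y) <= g1 * u_dom) by (apply Rmult_le_compat_l; lra).
  unfold g1 in *. lra.
Qed.

Lemma fall_end_V_neg : V c < 0.
Proof.
  pose proof r_dom_ge1. pose proof x_fall_bounds. pose proof Hc as [Hcb [Hfall [Hrc HVc]]].
  destruct (Req_dec (V c) 0) as [HV0|]; [exfalso|lra].
  destruct (Req_dec c sB) as [->|HcB].
  { destruct (Hstart sB ltac:(lra)) as [_ [_ HV]]. nra. }
  destruct (Rlt_le_dec (r c) r_dom) as [Hl|Hl].
  - pose proof (fall_speed_low c ltac:(lra) Hl). pose proof g1_pos. pose proof u_dom_pos.
    rewrite HV0 in *. nra.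
  - assert (r c + p (T c) * flux rcut (r c) <= - r c).
    { destruct (fall_r_range c ltac:(lra)) as [Hr _].
      rewrite flux_id by (unfold rcut; lra). now apply accel_large. }
    assert (0 <= r c + p (T c) * flux rcut (r c)); [|lra].
    apply (deriv_ge0_at_root_from_below V (fun x => r x + p (T x) * flux rcut (r x)) sB c);
      [lra| | |exact HV0|].
    + intros y Hy. apply (Hder y). lra.
    + apply (continuous_plus (V:=R_NormedModule)); [apply continuous_r|].
      apply (continuous_mult (K:=R_AbsRing)).
      * apply (continuous_comp T p); [apply continuous_T| apply continuous_p].
      * apply (continuous_comp r (flux rcut)); [apply continuous_r|].
        apply continuous_flux. unfold rcut. pose proof w_pos. lra.
    + intros y Hy. apply Hfall; lra.
Qed.

End Falling.

Section NoLanding.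
Hypothesis Hfall : forall y, sB <= y <= x_fall -> 0 < r y /\ V y < 0.

Lemma falls_until_x_fall : falls_until x_fall.
Proof.
  pose proof x_fall_bounds. destruct (Hfall x_fall ltac:(lra)).
  split; [lra|]. split; [intros; apply Hfall; lra| lra].
Qed.

Lemma fall_speed y : sA + 1 <= y <= x_fall -> V y <= - vmin.
Proof.
  intros Hy. pose proof x_fall_bounds. pose proof vmin_bounds. pose proof r_dom_ge1.
  pose proof falls_until_x_fall as Hc.
  destruct (Hfall y ltac:(lra)) as [_ HVy].
  destruct (Rlt_le_dec (r y) r_dom) as [Hl|Hl].
  - pose proof (fall_speed_low x_fall Hc y ltac:(lra) Hl).
    pose proof g1_pos. pose proof u_dom_pos.
    apply Rnot_lt_le. intros Hlt. assert (V y * V y < vmin * vmin) by nra. nra.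
  - assert (V y - V sA <= - r_dom * (y - sA)); [|nra].
    apply (diff_le_of_deriv_le V (fun x => r x + p (T x) * (r x * powq (r x)))); [lra| | |].
    + intros z Hz. apply is_derive_V; [lra|].
      destruct (fall_r_range x_fall Hc z ltac:(lra)) as [Hr _]. unfold rcut. lra.
    + intros; apply continuous_V.
    + intros z Hz. pose proof (fall_r_decr x_fall Hc z y ltac:(lra) ltac:(lra)).
      pose proof (accel_large (r z) (T z) ltac:(lra)). lra.
Qed.

Lemma fall_lands_before : False.
Proof.
  pose proof x_fall_bounds. pose proof vmin_bounds. pose proof delta_pos. pose proof w_pos.
  assert (r x_fall - r (sA + 1) <= - (delta * vmin) * (x_fall - (sA + 1))).
  { apply (diff_le_of_deriv_le r (fun x => delta * V x)); [lra| | |].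
    - intros z Hz. apply is_derive_r; lra.
    - intros; apply continuous_r.
    - intros z Hz. pose proof (fall_speed z ltac:(lra)). nra. }
  assert (r (sA + 1) <= w).
  { apply (fall_r_range x_fall falls_until_x_fall); lra. }
  assert (w < delta * vmin * (x_fall - (sA + 1))).
  { replace w with (delta * vmin * (w / (delta * vmin))) at 1 by (field; lra).
    apply Rmult_lt_compat_l; [nra|]. unfold x_fall. lra. }
  destruct (Hfall x_fall ltac:(lra)). lra.
Qed.

End NoLanding.

Lemma landing : exists c, sA < c < xmax /\ r c = 0 /\ V c < 0 /\ e_apex <= V c * V c / 2 /\
  forall y, sA <= y < c -> 0 < r y <= w.
Proof.
  pose proof x_fall_bounds. pose proof r_dom_ge1.
  set (g := fun x => Rmin (r x) (- V x)).
  assert (Hgc : forall x, continuous g x).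
  { intros x. apply continuous_Rmin; [apply continuous_r|]. apply (continuous_opp V), continuous_V. }
  assert (HgB : 0 < g sB).
  { destruct (Hstart sB ltac:(lra)) as [A1 [_ A2]]. apply Rmin_glb_lt; nra. }
  destruct (classic (exists x, sB <= x <= x_fall /\ g x <= 0)) as [[x [Hx Hgx]]|Hno].
  2:{ exfalso. apply fall_lands_before. intros y Hy.
      assert (0 < g y) by (apply Rnot_le_lt; intros Hle; apply Hno; now exists y).
      apply Rmin_Rgt in H1. lra. }
  destruct (first_root g sB x ltac:(lra) Hgc HgB Hgx) as [c [Hc [Hgc0 Hbef]]].
  assert (Hfall : forall y, sB <= y < c -> 0 < r y /\ V y < 0).
  { intros y Hy. specialize (Hbef y Hy). apply Rmin_Rgt in Hbef. lra. }
  assert (Hsign : 0 <= r c /\ V c <= 0 /\ (r c = 0 \/ V c = 0))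
    by (unfold g, Rmin in Hgc0; destruct Rle_dec in Hgc0; lra).
  destruct Hsign as [Hrc [HVc Hroot]].
  assert (Hc' : falls_until c) by (split; [lra| split; [exact Hfall| lra]]).
  pose proof (fall_end_V_neg c Hc') as HVneg.
  assert (Hr0 : r c = 0) by (destruct Hroot; lra).
  exists c. split; [lra|]. split; [exact Hr0|]. split; [exact HVneg|]. split.
  - pose proof (fall_energy c Hc' c ltac:(lra)) as HE.
    unfold energy, upow in HE. rewrite Hr0 in HE. lra.
  - intros y Hy. destruct (fall_r_range c Hc' y ltac:(lra)) as [Hr Hp]. specialize (Hp ltac:(lra)). lra.
Qed.

End FallFrom.
End Fall.

Lemma descent : exists sE, 0 < sE < xmax /\ r sE = 0 /\ V sE < 0 /\
  g1 * (w * w) <= 2 * g2 * (V sE * V sE) /\ (forall x, 0 < x < sE -> 0 < r x <= w).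
Proof.
  destruct ascent as [sA Hapex].
  destruct (fall_start sA Hapex) as [sB [HsB Hstart]].
  destruct (landing sA Hapex sB HsB Hstart) as [c [Hc [Hr0 [HV [HE Hrange]]]]].
  destruct Hapex as [HsA [HVA [Hrpos [Hrw Hu]]]].
  exists c. do 3 (split; [auto; lra|]). split.
  - unfold e_apex in HE. pose proof g1_pos. pose proof g1_le_g2.
    assert (g1 * (w * w) <= g1 * (2 * g2 * upow (r sA))) by (apply Rmult_le_compat_l; lra).
    assert (2 * g2 * (g1 * upow (r sA)) <= 2 * g2 * (V c * V c)) by (apply Rmult_le_compat_l; lra).
    nra.
  - intros x Hx. destruct (Rle_lt_dec x sA).
    + split; [apply Hrpos| apply Hrw]; lra.
    + apply Hrange; lra.
Qed.

Section TimeChange.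
Variable sE : R.
Hypotheses (HsE : 0 < sE < xmax) (HrE : r sE = 0).
Hypothesis Hrin : forall x, 0 < x < sE -> 0 < r x <= w.

Lemma flux_inside x : 0 < x < sE -> flux rcut (r x) = r x * powq (r x).
Proof. intros Hx. apply flux_id. destruct (Hrin x Hx). unfold rcut. lra. Qed.

Lemma flux_inside_pos x : 0 < x < sE -> 0 < flux rcut (r x).
Proof.
  intros Hx. rewrite flux_inside by auto. destruct (Hrin x Hx).
  apply Rmult_lt_0_compat; [lra| now apply ppow_gt0].
Qed.

Lemma is_derive_T x : 0 < x < sE -> is_derive T x (flux rcut (r x)).
Proof. intros Hx. apply (Hder x). lra. Qed.

Lemma T_lt a b : 0 <= a -> a < b -> b <= sE -> T a < T b.
Proof.
  intros H0a Hab HbE.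
  destruct (MVT_open T (fun x => flux rcut (r x)) a b Hab) as [c [Hc Hm]].
  - intros x Hx. apply is_derive_T; lra.
  - intros; apply continuous_T.
  - pose proof (flux_inside_pos c ltac:(lra)). nra.
Qed.

Lemma T_le a b : 0 <= a -> a <= b -> b <= sE -> T a <= T b.
Proof. intros. destruct (Req_dec a b) as [->|]; [lra|]. left; apply T_lt; lra. Qed.

Definition t_land : R := T sE.

Lemma s_lt_t_land : s < t_land.
Proof. destruct Hinit as [_ [_ <-]]. apply T_lt; lra. Qed.

Definition Tinv (t : R) : R := epsilon (inhabits 0) (fun x => 0 <= x <= sE /\ T x = t).

Lemma Tinv_spec t : s <= t <= t_land -> 0 <= Tinv t <= sE /\ T (Tinv t) = t.
Proof.
  intros Ht. unfold Tinv. apply epsilon_spec.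
  destruct Hinit as [_ [_ HT0]].
  destruct (IVT_gen_consistent T 0 sE t continuous_T) as [x [Hx Hx']].
  { pose proof (T_le 0 sE ltac:(lra) ltac:(lra) ltac:(lra)).
    rewrite Rmin_left, Rmax_right by lra. unfold t_land in Ht. lra. }
  exists x. rewrite Rmin_left, Rmax_right in Hx by lra. auto.
Qed.

Lemma Tinv_T x : 0 <= x <= sE -> Tinv (T x) = x.
Proof.
  intros Hx. destruct Hinit as [_ [_ HT0]].
  destruct (Tinv_spec (T x)) as [H1 H2].
  { unfold t_land. rewrite <- HT0. split; apply T_le; lra. }
  destruct (Rtotal_order (Tinv (T x)) x) as [Hl|[He|Hg]]; auto.
  - pose proof (T_lt (Tinv (T x)) x ltac:(lra) Hl ltac:(lra)). lra.
  - pose proof (T_lt x (Tinv (T x)) ltac:(lra) Hg ltac:(lra)). lra.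
Qed.

Lemma Tinv_lt t x : s <= t <= t_land -> 0 <= x <= sE -> (t < T x <-> Tinv t < x).
Proof.
  intros Ht Hx. destruct (Tinv_spec t Ht) as [H1 H2]. split; intros Hlt.
  - apply Rnot_le_lt. intros Hle. pose proof (T_le x (Tinv t) ltac:(lra) Hle ltac:(lra)). lra.
  - rewrite <- H2. now apply T_lt; lra.
Qed.

Lemma Tinv_interior t : s < t < t_land -> 0 < Tinv t < sE.
Proof.
  intros Ht. destruct Hinit as [_ [_ HT0]]. destruct (Tinv_spec t ltac:(lra)) as [H1 H2].
  split.
  - destruct (Req_dec (Tinv t) 0) as [E|E]; [rewrite E in H2; lra| lra].
  - destruct (Req_dec (Tinv t) sE) as [E|E]; [rewrite E in H2; unfold t_land in Ht; lra| lra].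
Qed.

Lemma is_derive_Tinv t : s < t < t_land -> is_derive Tinv t (1 / flux rcut (r (Tinv t))).
Proof.
  intros Ht. destruct Hinit as [_ [_ HT0]].
  destruct (Tinv_interior t Ht) as [Hs1 Hs2]. destruct (Tinv_spec t ltac:(lra)) as [_ HTS].
  set (x := Tinv t) in *. set (a := x / 2). set (b := (x + sE) / 2).
  assert (Hab : 0 < a < x /\ x < b < sE) by (unfold a, b; lra).
  assert (HTa : T a < t) by (rewrite <- HTS; apply T_lt; lra).
  assert (HTb : t < T b) by (rewrite <- HTS; apply T_lt; lra).
  assert (HTa0 : s <= T a) by (rewrite <- HT0; apply T_le; lra).
  assert (HTbE : T b <= t_land) by (unfold t_land; apply T_le; lra).
  assert (Ea : Tinv (T a) = a) by (apply Tinv_T; lra).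
  assert (Eb : Tinv (T b) = b) by (apply Tinv_T; lra).
  assert (HTinv : forall y, T a <= y <= T b -> a <= Tinv y <= b).
  { intros y Hy. split.
    - destruct (Req_dec y (T a)) as [->|Hya]; [lra|].
      apply Rnot_lt_le. intros Hlt. apply (Tinv_lt y a) in Hlt; lra.
    - destruct (Req_dec y (T b)) as [->|Hyb]; [lra|].
      left. apply (Tinv_lt y b); lra. }
  apply is_derive_Reals.
  assert (Hc : continuity_pt Tinv t).
  { apply (continuity_pt_recip_interv T Tinv a b); [lra| | | | |lra].
    - intros u v Hu Huv Hv. apply T_lt; lra.
    - intros y Hy1 Hy2. unfold comp, id. apply Tinv_spec. lra.
    - intros y Hy1 Hy2. apply HTinv. lra.
    - intros y Hy. apply continuity_pt_filterlim, continuous_T. }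
  pose (Hd := fun y (H : Tinv (T a) <= y <= Tinv (T b)) =>
    exist (fun l => derivable_pt_lim T y l) (flux rcut (r y))
      (proj1 (is_derive_Reals _ _ _) (is_derive_T y ltac:(rewrite Ea, Eb in H; lra)))).
  assert (Hx : Tinv (T a) <= Tinv t <= Tinv (T b)) by (rewrite Ea, Eb; fold x; lra).
  apply (derivable_pt_lim_recip_interv T Tinv (T a) (T b) t Hd Hc ltac:(lra) ltac:(lra) Hx).
  - intros y Hy. unfold comp, id. apply Tinv_spec. lra.
  - simpl. apply Rgt_not_eq, flux_inside_pos. fold x. lra.
Qed.

Definition u_t (t : R) : R := ppow (qexp + 2) (r (Tinv t)).
Definition v_t (t : R) : R := V (Tinv t).

Lemma u_t_pos t : s < t < t_land -> 0 < u_t t.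
Proof.
  intros Ht. destruct (Tinv_interior t Ht). destruct (Hrin (Tinv t) ltac:(lra)).
  now apply ppow_gt0.
Qed.

Lemma is_derive_u_t t : s < t < t_land -> is_derive u_t t (v_t t).
Proof.
  intros Ht. destruct (Tinv_interior t Ht) as [Hx1 Hx2].
  assert (HF := flux_inside_pos (Tinv t) ltac:(lra)). rewrite flux_inside in HF by lra.
  assert (D1 := is_derive_comp r Tinv t _ _ (is_derive_r (Tinv t) ltac:(lra)) (is_derive_Tinv t Ht)).
  destruct (Hrin (Tinv t) ltac:(lra)) as [Hr _].
  assert (D2 := is_derive_comp (ppow (qexp + 2)) (fun t => r (Tinv t)) t _ _
                  (is_derive_ppow (qexp + 2) (r (Tinv t)) Hr) D1).
  apply (is_derive_Req _ _ _ _ D2). unfold v_t, scal; simpl. unfold mult; simpl.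
  replace (qexp + 2 - 1) with (qexp + 1) by ring.
  rewrite flux_inside, ppow_succ by lra. fold (powq (r (Tinv t))).
  rewrite qexp_plus2. pose proof delta_pos. assert (0 < powq (r (Tinv t))) by now apply ppow_gt0.
  field. lra.
Qed.

Lemma is_derive_v_t t : s < t < t_land -> is_derive v_t t (/ Rpower (u_t t) alpha + p t).
Proof.
  intros Ht. destruct (Tinv_interior t Ht) as [Hx1 Hx2]. destruct (Tinv_spec t ltac:(lra)) as [_ HTt].
  destruct (Hrin (Tinv t) ltac:(lra)) as [Hr _].
  assert (HQ : 0 < powq (r (Tinv t))) by (now apply ppow_gt0).
  destruct (Hder (Tinv t) ltac:(lra)) as [_ [DV _]].
  assert (D := is_derive_comp V Tinv t _ _ DV (is_derive_Tinv t Ht)).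
  apply (is_derive_Req _ _ _ _ D). unfold scal; simpl. unfold mult; simpl.
  unfold u_t. rewrite flux_inside, HTt, ppow_pos, Rpower_mult, qexp_alpha by lra.
  unfold powq in *. rewrite ppow_pos in * by lra. field. lra.
Qed.

Lemma u_t_s : u_t s = 0.
Proof.
  destruct Hinit as [Hr0 [_ HT0]]. unfold u_t. rewrite <- HT0, Tinv_T, Hr0 by lra.
  apply ppow_nonpos; lra.
Qed.

Lemma u_t_land : u_t t_land = 0.
Proof. unfold u_t, t_land. rewrite Tinv_T, HrE by lra. apply ppow_nonpos; lra. Qed.

Lemma Tinv_near_s e : 0 < e -> exists d, 0 < d /\ forall t, s < t < s + d -> Rabs (Tinv t - 0) < e.
Proof.
  intros He. destruct Hinit as [_ [_ HT0]]. set (e' := Rmin e sE / 2).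
  assert (He' : 0 < e' < sE /\ e' < e).
  { unfold e'. pose proof (Rmin_l e sE). pose proof (Rmin_r e sE).
    assert (0 < Rmin e sE) by (apply Rmin_pos; lra). lra. }
  exists (T e' - s). split; [rewrite <- HT0; pose proof (T_lt 0 e' ltac:(lra) ltac:(lra) ltac:(lra)); lra|].
  intros t Ht. assert (T e' <= t_land) by (unfold t_land; apply T_le; lra).
  destruct (Tinv_spec t ltac:(lra)) as [H1 _].
  pose proof (proj1 (Tinv_lt t e' ltac:(lra) ltac:(lra)) ltac:(lra)).
  rewrite Rminus_0_r, Rabs_pos_eq; lra.
Qed.

Lemma Tinv_near_t_land e : 0 < e ->
  exists d, 0 < d /\ forall t, t_land - d < t < t_land -> Rabs (Tinv t - sE) < e.
Proof.
  intros He. destruct Hinit as [_ [_ HT0]]. set (e' := Rmin e sE / 2).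
  assert (He' : 0 < e' < sE /\ e' < e).
  { unfold e'. pose proof (Rmin_l e sE). pose proof (Rmin_r e sE).
    assert (0 < Rmin e sE) by (apply Rmin_pos; lra). lra. }
  exists (t_land - T (sE - e')).
  split; [unfold t_land; pose proof (T_lt (sE - e') sE ltac:(lra) ltac:(lra) ltac:(lra)); lra|].
  intros t Ht. assert (s <= T (sE - e')) by (rewrite <- HT0; apply T_le; lra).
  destruct (Tinv_spec t ltac:(lra)) as [H1 _].
  assert (sE - e' <= Tinv t).
  { apply Rnot_lt_le. intros Hlt. apply (Tinv_lt t (sE - e')) in Hlt; lra. }
  rewrite Rabs_minus_sym, Rabs_pos_eq; lra.
Qed.

Lemma filterlim_Tinv_s (phi : R -> R) : continuous phi 0 ->
  filterlim (fun t => phi (Tinv t)) (at_right s) (locally (phi 0)).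
Proof.
  intros Hc. apply filterlim_at_right_eps. intros e He.
  destruct (proj1 (continuous_eps_delta _ _) Hc e He) as [d1 [Hd1 H1]].
  destruct (Tinv_near_s d1 Hd1) as [d2 [Hd2 H2]].
  exists d2. split; [exact Hd2|]. intros t Ht. apply H1, H2, Ht.
Qed.

Lemma filterlim_Tinv_t_land (phi : R -> R) : continuous phi sE ->
  filterlim (fun t => phi (Tinv t)) (at_left t_land) (locally (phi sE)).
Proof.
  intros Hc. apply filterlim_at_left_eps. intros e He.
  destruct (proj1 (continuous_eps_delta _ _) Hc e He) as [d1 [Hd1 H1]].
  destruct (Tinv_near_t_land d1 Hd1) as [d2 [Hd2 H2]].
  exists d2. split; [exact Hd2|]. intros t Ht. apply H1, H2, Ht.
Qed.

Lemma u_t_v_t_limits :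
  filterlim u_t (at_right s) (locally 0) /\ filterlim u_t (at_left t_land) (locally 0) /\
  filterlim v_t (at_right s) (locally w) /\ filterlim v_t (at_left t_land) (locally (V sE)).
Proof.
  destruct Hinit as [Hr0 [HV0 _]]. pose proof qexp_pos.
  assert (Hphi : forall x, continuous (fun x => ppow (qexp + 2) (r x)) x).
  { intros x. apply (continuous_comp r (ppow (qexp + 2))); [apply continuous_r|].
    apply continuous_ppow. lra. }
  assert (Hu0 : forall x, r x = 0 -> ppow (qexp + 2) (r x) = 0) by (intros x ->; apply ppow_nonpos; lra).
  split; [|split; [|split]].
  - rewrite <- (Hu0 0 Hr0). apply (filterlim_Tinv_s (fun x => ppow (qexp + 2) (r x))), Hphi.
  - rewrite <- (Hu0 sE HrE). apply (filterlim_Tinv_t_land (fun x => ppow (qexp + 2) (r x))), Hphi.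
  - rewrite <- HV0. apply filterlim_Tinv_s, continuous_V.
  - apply filterlim_Tinv_t_land, continuous_V.
Qed.

Lemma time_change_flight : V sE < 0 -> free_flight alpha p s t_land w (V sE) u_t v_t.
Proof.
  intros HV. destruct u_t_v_t_limits as [L1 [L2 [L3 L4]]].
  split; [exact s_lt_t_land|]. split; [exact u_t_s|]. split; [exact u_t_land|].
  split; [|auto].
  intros t Ht. split; [now apply u_t_pos|]. split; [now apply is_derive_u_t| now apply is_derive_v_t].
Qed.

End TimeChange.

Lemma flight : exists s' w' u v, free_flight alpha p s s' w w' u v /\ g1 * (w * w) <= 2 * g2 * (w' * w').
Proof.
  destruct descent as [sE [HsE [HrE [HVE [Hsp Hrin]]]]].
  exists (t_land sE), (V sE), (u_t sE), (v_t sE). split; [|exact Hsp].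
  now apply time_change_flight.
Qed.

End Flight.
End Model.

Theorem flight_exists (alpha p1 p2 Lp : R) (p : R -> R) :
  0 < alpha < 1 -> p2 <= p1 -> p1 < 0 -> (forall t, p2 <= p t <= p1) -> 0 <= Lp ->
  (forall x y, Rabs (p x - p y) <= Lp * Rabs (x - y)) ->
  exists W, 0 < W /\ forall s w, W <= w ->
    exists s' w' u v, free_flight alpha p s s' w w' u v /\ g1 p1 * (w * w) <= 2 * g2 p2 * (w' * w').
Proof.
  intros Ha Hp12 Hp1 Hpb HLp Hpl.
  pose proof (r_dom_ge1 alpha p1). pose proof (delta_pos alpha Ha). pose proof (u_dom_pos alpha p1 Ha).
  assert (Hg2 : 0 < g2 p2) by (unfold g2; lra).
  set (W := r_dom alpha p1 + 2 * r_dom alpha p1 / delta alpha + 8 * g2 p2 * u_dom alpha p1 + 1).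
  assert (0 <= 2 * r_dom alpha p1 / delta alpha) by (apply Rdiv_le_0_compat; lra).
  assert (0 <= 8 * g2 p2 * u_dom alpha p1) by (apply Rmult_le_pos; lra).
  exists W. split; [unfold W; lra|]. intros s w Hw.
  assert (Hw_dom : r_dom alpha p1 <= w) by (unfold W in Hw; lra).
  assert (Hw_delta : 2 * r_dom alpha p1 / delta alpha <= w) by (unfold W in Hw; lra).
  assert (Hw_u : 8 * g2 p2 * u_dom alpha p1 <= w * w) by (unfold W in Hw; nra).
  set (xmax := x_land alpha p1 w + 1).
  pose proof (x_apex_bounds alpha p1 Ha Hp1 w Hw_dom).
  assert (Hrcut : 0 <= rcut w) by (unfold rcut; lra).
  destruct (picard_lindelof (vf_r alpha) (vf_v alpha p (rcut w)) (vf_t alpha (rcut w))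
              (vf_lip alpha p2 Lp (rcut w)) xmax 0 w s)
    as [[r V T] [Hc [Hr0 [HV0 [HT0 Hd]]]]].
  - apply (vf_lip_bounds alpha p1 p2 Lp Ha Hp12 Hp1 HLp).
  - unfold xmax. lra.
  - apply (vf_r_lipschitz alpha p1 p2 Lp Ha Hp12 Hp1 HLp).
  - apply (vf_v_lipschitz alpha p1 p2 Lp p Ha Hp12 Hp1 Hpb HLp Hpl _ Hrcut).
  - apply (vf_t_lipschitz alpha p1 p2 Lp Ha Hp12 Hp1 HLp _ Hrcut).
  - apply (flight alpha p1 p2 Lp p Ha Hp12 Hp1 Hpb HLp Hpl w s xmax r V T Hw_dom Hw_u Hw_delta);
      [unfold xmax; lra| exact Hc| simpl; auto| exact Hd].
Qed.

Lemma filterlim_at_right_ext_near (f g : R -> R) x d (F : (R -> Prop) -> Prop) : 0 < d ->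
  (forall t, x < t < x + d -> f t = g t) -> filterlim f (at_right x) F -> filterlim g (at_right x) F.
Proof.
  intros Hd H. apply filterlim_ext_loc. exists (mkposreal d Hd). intros y Hy Hxy. apply H.
  unfold ball in Hy; simpl in Hy. unfold AbsRing_ball, abs, minus, plus, opp in Hy; simpl in Hy.
  unfold Rabs in Hy; destruct Rcase_abs in Hy; lra.
Qed.

Lemma filterlim_at_left_ext_near (f g : R -> R) x d (F : (R -> Prop) -> Prop) : 0 < d ->
  (forall t, x - d < t < x -> f t = g t) -> filterlim f (at_left x) F -> filterlim g (at_left x) F.
Proof.
  intros Hd H. apply filterlim_ext_loc. exists (mkposreal d Hd). intros y Hy Hxy. apply H.
  unfold ball in Hy; simpl in Hy. unfold AbsRing_ball, abs, minus, plus, opp in Hy; simpl in Hy.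
  unfold Rabs in Hy; destruct Rcase_abs in Hy; lra.
Qed.

Lemma is_derive_ext_near (f g : R -> R) x d l : 0 < d ->
  (forall t, x - d < t < x + d -> f t = g t) -> is_derive f x l -> is_derive g x l.
Proof.
  intros Hd H. apply is_derive_ext_loc. exists (mkposreal d Hd). intros y Hy. apply H.
  unfold ball in Hy; simpl in Hy. unfold AbsRing_ball, abs, minus, plus, opp in Hy; simpl in Hy.
  unfold Rabs in Hy; destruct Rcase_abs in Hy; lra.
Qed.

Definition glue (s' : R) (f g : R -> R) (t : R) : R := if Rlt_dec t s' then f t else g t.

Lemma glue_l s' f g t : t < s' -> glue s' f g t = f t.
Proof. intros H. unfold glue. destruct Rlt_dec; [auto| lra]. Qed.

Lemma glue_r s' f g t : s' <= t -> glue s' f g t = g t.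
Proof. intros H. unfold glue. destruct Rlt_dec; [lra| auto]. Qed.

Section Glue.
Variables (alpha : R) (p : R -> R) (s' : R) (u v u2 v2 : R -> R).

Lemma solves_on_glue_l a b : b <= s' -> solves_on alpha p u v a b ->
  solves_on alpha p (glue s' u u2) (glue s' v v2) a b.
Proof.
  intros Hb Hsol t Ht. destruct (Hsol t Ht) as [Hpos [Du Dv]].
  assert (Hd : 0 < Rmin (t - a) (b - t)) by (apply Rmin_pos; lra).
  assert (Hnear : forall y, t - Rmin (t - a) (b - t) < y < t + Rmin (t - a) (b - t) -> y < s')
    by (intros y Hy; pose proof (Rmin_r (t - a) (b - t)); lra).
  rewrite glue_l by lra. split; [exact Hpos|]. split.
  - rewrite glue_l by lra. apply (is_derive_ext_near u _ t _ _ Hd); [|exact Du].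
    intros y Hy. rewrite glue_l; auto.
  - apply (is_derive_ext_near v _ t _ _ Hd); [|exact Dv].
    intros y Hy. rewrite glue_l; auto.
Qed.

Lemma solves_on_glue_r a b : s' <= a -> solves_on alpha p u2 v2 a b ->
  solves_on alpha p (glue s' u u2) (glue s' v v2) a b.
Proof.
  intros Ha Hsol t Ht. destruct (Hsol t Ht) as [Hpos [Du Dv]].
  assert (Hd : 0 < t - a) by lra.
  rewrite glue_r by lra. split; [exact Hpos|]. split.
  - rewrite glue_r by lra. apply (is_derive_ext_near u2 _ t _ _ Hd); [|exact Du].
    intros y Hy. rewrite glue_r; lra.
  - apply (is_derive_ext_near v2 _ t _ _ Hd); [|exact Dv].
    intros y Hy. rewrite glue_r; lra.
Qed.

Lemma filterlim_glue_right_l (f g : R -> R) x F : x < s' ->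
  filterlim f (at_right x) F -> filterlim (glue s' f g) (at_right x) F.
Proof.
  intros Hx. apply (filterlim_at_right_ext_near _ _ x (s' - x)); [lra|].
  intros t Ht. rewrite glue_l; lra.
Qed.

Lemma filterlim_glue_left_l (f g : R -> R) x a F : a < x <= s' ->
  filterlim f (at_left x) F -> filterlim (glue s' f g) (at_left x) F.
Proof.
  intros Hx. apply (filterlim_at_left_ext_near _ _ x (x - a)); [lra|].
  intros t Ht. rewrite glue_l; lra.
Qed.

Lemma filterlim_glue_right_r (f g : R -> R) x F : s' <= x ->
  filterlim g (at_right x) F -> filterlim (glue s' f g) (at_right x) F.
Proof.
  intros Hx. apply (filterlim_at_right_ext_near _ _ x 1); [lra|].
  intros t Ht. rewrite glue_r; lra.
Qed.

Lemma filterlim_glue_left_r (f g : R -> R) x F : s' < x ->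
  filterlim g (at_left x) F -> filterlim (glue s' f g) (at_left x) F.
Proof.
  intros Hx. apply (filterlim_at_left_ext_near _ _ x (x - s')); [lra|].
  intros t Ht. rewrite glue_r; lra.
Qed.

End Glue.

Lemma bouncing_chain_0 alpha p1 p2 p t0 v0 :
  bouncing_chain alpha p1 p2 p t0 v0 0 (fun _ => 0) (fun _ => v0) (fun _ => t0).
Proof.
  split; [reflexivity|]. split; [intros; lia|]. split; [reflexivity|].
  split; [intros; lia|]. split; [apply filterlim_const| intros; lia].
Qed.

Lemma bouncing_chain_times_ge alpha p1 p2 p t0 v0 n u v s :
  bouncing_chain alpha p1 p2 p t0 v0 n u v s -> forall j, (j <= n)%nat -> t0 <= s j.
Proof.
  intros [H0 [Hincr _]] j. induction j as [|j IH]; intros Hj; [rewrite H0; lra|].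
  pose proof (Hincr j ltac:(lia)). pose proof (IH ltac:(lia)). lra.
Qed.

Lemma bouncing_chain_cons alpha p1 p2 p t0 v0 n s' w' u v u2 v2 s2 :
  free_flight alpha p t0 s' v0 w' u v -> vthr alpha p1 p2 < - w' ->
  bouncing_chain alpha p1 p2 p s' (- w') n u2 v2 s2 ->
  bouncing_chain alpha p1 p2 p t0 v0 (S n) (glue s' u u2) (glue s' v v2)
    (fun i => match i with O => t0 | S j => s2 j end).
Proof.
  intros [Hs' [Hu0 [Hu1 [Hsol [Lu0 [Lu1 [Lv0 [Lv1 Hw']]]]]]]] Hthr Hch.
  pose proof (bouncing_chain_times_ge _ _ _ _ _ _ _ _ _ _ Hch) as Hge.
  destruct Hch as [C0 [C1 [C2 [C3 [C4 C5]]]]].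
  split; [reflexivity|]. split.
  { intros [|i] Hi; [rewrite C0; lra| apply C1; lia]. }
  split.
  { intros [|i] Hi; [rewrite glue_l; lra|]. rewrite glue_r by (apply Hge; lia). apply C2. lia. }
  split.
  { intros [|i] Hi.
    - rewrite C0. split; [now apply solves_on_glue_l; [lra|]|].
      split; [now apply filterlim_glue_right_l|].
      split; [now apply (filterlim_glue_left_l _ _ _ _ t0)|].
      exists v0, w'. split; [now apply filterlim_glue_right_l|].
      split; [now apply (filterlim_glue_left_l _ _ _ _ t0)| exact Hw'].
    - destruct (C3 i ltac:(lia)) as [Sol [L0 [L1 [win [wout [Lw0 [Lw1 Hwo]]]]]]].
      pose proof (Hge i ltac:(lia)). pose proof (C1 i ltac:(lia)).
      split; [now apply solves_on_glue_r|].
      split; [now apply filterlim_glue_right_r|].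
      split; [apply filterlim_glue_left_r; auto; lra|].
      exists win, wout. split; [now apply filterlim_glue_right_r|].
      split; [apply filterlim_glue_left_r; auto; lra| exact Hwo]. }
  split; [now apply filterlim_glue_right_l|].
  intros [|[|i]] Hi; [lia| |].
  - exists w'. rewrite C0. split; [now apply (filterlim_glue_left_l _ _ _ _ t0)|].
    split; [apply filterlim_glue_right_r; [lra| exact C4]| exact Hthr].
  - destruct (C5 (S i) ltac:(lia)) as [w [Lw0 [Lw1 Hw]]].
    pose proof (Hge i ltac:(lia)). pose proof (C1 i ltac:(lia)).
    exists w. split; [apply filterlim_glue_left_r; auto; lra|].
    split; [apply filterlim_glue_right_r; auto; lra| exact Hw].
Qed.

Lemma chain_exists alpha p1 p2 p (W kappa : R) :
  0 < W -> vthr alpha p1 p2 < W -> 0 < kappa <= 1 ->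
  (forall s w, W <= w ->
     exists s' w' u v, free_flight alpha p s s' w w' u v /\ kappa * (w * w) <= w' * w') ->
  forall n t0 v0, 0 < v0 -> W * W <= kappa ^ n * (v0 * v0) ->
    exists u v s, bouncing_chain alpha p1 p2 p t0 v0 n u v s.
Proof.
  intros HW Hthr Hk Hflight n. induction n as [|n IH]; intros t0 v0 Hv0 Hv.
  { exists (fun _ => 0), (fun _ => v0), (fun _ => t0). apply bouncing_chain_0. }
  assert (Hkn : 0 < kappa ^ n <= 1).
  { split; [apply pow_lt; lra|]. rewrite <- (pow1 n). apply pow_incr; lra. }
  simpl in Hv.
  assert (HWv : W <= v0).
  { apply Rnot_lt_le. intros Hlt. assert (v0 * v0 < W * W) by nra.
    assert (kappa * kappa ^ n <= 1) by nra. nra. }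
  destruct (Hflight t0 v0 HWv) as [s' [w' [u [v [Hfl Hw']]]]].
  assert (Hv' : W * W <= kappa ^ n * (- w' * - w')).
  { replace (- w' * - w') with (w' * w') by ring.
    apply Rle_trans with (kappa * kappa ^ n * (v0 * v0)); [exact Hv|].
    replace (kappa * kappa ^ n * (v0 * v0)) with (kappa ^ n * (kappa * (v0 * v0))) by ring.
    apply Rmult_le_compat_l; lra. }
  pose proof Hfl as (_ & _ & _ & _ & _ & _ & _ & _ & Hneg).
  destruct (IH s' (- w') ltac:(lra) Hv') as [u2 [v2 [s2 Hch]]].
  exists (glue s' u u2), (glue s' v v2), (fun i => match i with O => t0 | S j => s2 j end).
  apply (bouncing_chain_cons _ _ _ _ _ _ _ _ w'); [exact Hfl| |exact Hch].
  apply Rlt_le_trans with W; [exact Hthr|].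
  apply Rnot_lt_le. intros Hlt. assert (w' * w' < W * W) by nra. nra.
Qed.

Lemma bouncing_chain_above alpha p1 p2 p (W kappa : R) :
  0 < W -> vthr alpha p1 p2 < W -> 0 < kappa <= 1 ->
  (forall s w, W <= w ->
     exists s' w' u v, free_flight alpha p s s' w w' u v /\ kappa * (w * w) <= w' * w') ->
  forall n, exists gamma, 0 < gamma /\
    forall t0 v0, gamma < v0 -> exists u v s, bouncing_chain alpha p1 p2 p t0 v0 n u v s.
Proof.
  intros HW Hthr Hk Hflight n.
  assert (Hkn : 0 < kappa ^ n <= 1).
  { split; [apply pow_lt; lra|]. rewrite <- (pow1 n). apply pow_incr; lra. }
  exists (W / kappa ^ n). split; [apply Rdiv_lt_0_compat; lra|]. intros t0 v0 Hv0.
  assert (HWv : W < v0 * kappa ^ n).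
  { apply (Rmult_lt_compat_r (kappa ^ n)) in Hv0; [|lra].
    unfold Rdiv in Hv0. rewrite Rmult_assoc, Rinv_l in Hv0; lra. }
  apply (chain_exists alpha p1 p2 p W kappa HW Hthr Hk Hflight); [nra|].
  assert (W * W <= (v0 * kappa ^ n) * (v0 * kappa ^ n)) by (apply Rmult_le_compat; lra).
  assert (kappa ^ n * kappa ^ n <= kappa ^ n) by nra. nra.
Qed.

Definition restitution (p1 p2 : R) : R := g1 p1 / (2 * g2 p2).

Lemma restitution_range p1 p2 : p2 <= p1 -> p1 < 0 -> 0 < restitution p1 p2 <= 1.
Proof.
  intros Hp12 Hp1. unfold restitution, g1, g2. split; [apply Rdiv_lt_0_compat; lra|].
  apply (Rmult_le_reg_r (2 * - p2)); [lra|]. field_simplify; lra.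
Qed.

Lemma restitution_le p1 p2 w w' : p1 < 0 -> p2 <= p1 ->
  g1 p1 * (w * w) <= 2 * g2 p2 * (w' * w') -> restitution p1 p2 * (w * w) <= w' * w'.
Proof.
  intros Hp1 Hp12 H. unfold restitution. assert (0 < g2 p2) by (unfold g2; lra).
  apply (Rmult_le_reg_r (2 * g2 p2)); [lra|]. field_simplify; lra.
Qed.

Lemma lipschitz_const_nonneg (f : R -> R) L :
  (forall x y, Rabs (f x - f y) <= L * Rabs (x - y)) -> 0 <= L.
Proof.
  intros HL. specialize (HL 1 0). rewrite Rminus_0_r, Rabs_R1, Rmult_1_r in HL.
  pose proof (Rabs_pos (f 1 - f 0)). lra.
Qed.

Theorem lemma3p4 (alpha p1 p2 : R) (p : R -> R) :
  0 < alpha < 1 ->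
  (exists L : R, forall x y : R, Rabs (p x - p y) <= L * Rabs (x - y)) ->
  p2 <= p1 -> p1 < 0 ->
  (forall t : R, p2 <= p t <= p1) ->
  forall n : nat, exists gamma : R, 0 < gamma /\
    forall t0 v0 : R, gamma < v0 ->
      exists (u v : R -> R) (s : nat -> R),
        bouncing_chain alpha p1 p2 p t0 v0 n u v s.
Proof.
  intros Ha [L HL] Hp12 Hp1 Hpb.
  destruct (flight_exists alpha p1 p2 L p Ha Hp12 Hp1 Hpb (lipschitz_const_nonneg p L HL) HL)
    as [W0 [HW0 Hflight]].
  pose proof (Rabs_pos (vthr alpha p1 p2)). pose proof (Rle_abs (vthr alpha p1 p2)).
  apply (bouncing_chain_above alpha p1 p2 p (W0 + Rabs (vthr alpha p1 p2) + 1) (restitution p1 p2));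
    [lra| lra| now apply restitution_range|].
  intros s w Hw. destruct (Hflight s w ltac:(lra)) as [s' [w' [u [v [Hfl Hsp]]]]].
  exists s', w', u, v. split; [exact Hfl|]. now apply restitution_le.
Qed.
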